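(* Let $\Sigma\subseteq\mathcal L$ be finite and closed under subformulas, let $\mathcal Q$ be a $\Sigma$-quasimodel, and suppose $\varphi\in\Sigma$ is falsified on $\mathcal Q$ (i.e. $\varphi\notin\ell(w)$ for some world $w$ of $\mathcal Q$). Then there is a bi-relational model (with $T=\mathbb Z$ and $S$ the successor function) that falsifies $\varphi$.
   Context: Language $\mathcal L$: formulas over a countably infinite set $\mathbb P$ of variables built with $\wedge,\vee,\Rightarrow,\Leftarrow$ (co-implication), unary $\mathsf X,\mathsf Y,\mathsf G,\mathsf H$ and binary $\mathsf U,\mathsf S$. Bi-relational model: $(W,T,\le,S,[\![\cdot]\!])$ with $(W,\le)$ a linear order, $S$ a bijection of $T$, and $[\![\cdot]\!]\colon\mathcal L\to2^{W\times T}$ with $[\![p]\!]$ downward closed in the first coordinate, Boolean clauses for $\wedge,\vee$, $(w,t)\in[\![\varphi\Rightarrow\psi]\!]$ iff $\forall v\le w\,((v,t)\in[\![\varphi]\!]\Rightarrow(v,t)\in[\![\psi]\!])$, $(w,t)\in[\![\varphi\Leftarrow\psi]\!]$ iff $\exists v\ge w\,((v,t)\in[\![\varphi]\!]\setminus[\![\psi]\!])$, and the usual linear-time clauses along $S$: $\mathsf X$ next, $\mathsf Y$ previous, $\mathsf G$ all $S^n(t)$, $n\ge0$, $\mathsf H$ all $S^{-n}(t)$, $n\ge 0$, $\varphi\,\mathsf U\,\psi$: some $n\ge0$ with $\psi$ at $S^n(t)$ and $\varphi$ at $S^i(t)$, $i<n$; $\mathsf S$ dually. It falsifies $\varphi$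 if $[\![\varphi]\!]\neq W\times T$. Let $\Sigma\subseteq\mathcal L$ be closed under subformulas. A $\Sigma$-type is $\Phi\subseteq\Sigma$ such that: for $\varphi\wedge\psi\in\Sigma$, $\varphi\wedge\psi\in\Phi$ iff $\varphi,\psi\in\Phi$; for $\varphi\vee\psi\in\Sigma$, $\varphi\vee\psi\in\Phi$ iff $\varphi\in\Phi$ or $\psi\in\Phi$; for $\varphi\Rightarrow\psi\in\Sigma$, ($\varphi\Rightarrow\psi\in\Phi$ implies $\varphi\notin\Phi$ or $\psi\in\Phi$) and ($\psi\in\Phi$ implies $\varphi\Rightarrow\psi\in\Phi$); for $\varphi\Leftarrow\psi\in\Sigma$, ($\varphi\Leftarrow\psi\in\Phi$ implies $\varphi\in\Phi$) and ($\varphi\in\Phi,\psi\notin\Phi$ implies $\varphi\Leftarrow\psi\in\Phi$). A poset is locally linear if it is a disjoint union of linear posets. A $\Sigma$-labelled space is $(W,\le,\ell)$ with $(W,\le)$ locally linear, $\ell\colon W\to$ $\Sigma$-types, $w\le v\Rightarrow\ell(w)\supseteq\ell(v)$, such that whenever $\varphi\Rightarrow\psi\in\Sigma\setminus\ell(w)$ there is $v\le w$ with $\varphi\in\ell(v)$, $\psi\notin\ell(v)$, and whenever $\varphi\Leftarrow\psi\in\ell(w)$ there is $v\ge w$ with $\varphi\in\ell(v)$, $\psi\notin\ell(v)$. A relation $R\subseteq W\times W$ is convex if every image set $\{y: xRy\}$ and every preimage set $\{x:xRy\}$ is convex in $\le$; fully confluent if (forth–down) $x\le x'Ry'$ implies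 $xRy\le y'$ for some $y$; (forth–up) $x'\ge xRy$ implies $x'Ry'\ge y$ for some $y'$; (back–down) $x'Ry'\ge y$ implies $x'\ge xRy$ for some $x$; (back–up) $xRy\le y'$ implies $x\le x'Ry'$ for some $x'$; bi-serial if every $w$ has some $v$ with $wRv$ and some $u$ with $uRw$. A pair $(\Phi,\Psi)$ of $\Sigma$-types is sensible if for formulas in $\Sigma$: $\mathsf X\varphi\in\Phi\iff\varphi\in\Psi$; $\mathsf Y\varphi\in\Psi\iff\varphi\in\Phi$; $\mathsf G\varphi\in\Phi\iff(\varphi\in\Phi$ and $\mathsf G\varphi\in\Psi)$; $\mathsf H\varphi\in\Psi\iff(\varphi\in\Psi$ and $\mathsf H\varphi\in\Phi)$; $\varphi\,\mathsf U\,\psi\in\Phi\iff(\psi\in\Phi$ or ($\varphi\in\Phi$ and $\varphi\,\mathsf U\,\psi\in\Psi$)); $\varphi\,\mathsf S\,\psi\in\Psi\iff(\psi\in\Psi$ or ($\varphi\in\Psi$ and $\varphi\,\mathsf S\,\psi\in\Phi$)). $R$ is sensible if $(\ell(w),\ell(v))$ is sensible whenever $wRv$. $R$ is $\omega$-sensible if: $\mathsf G\varphi\in\Sigma\setminus\ell(w)$ implies some $v$ with $wR^nv$ ($n\ge0$) and $\varphi\notin\ell(v)$; $\mathsf H\varphi\in\Sigma\setminus\ell(w)$ implies some $v$ with $vR^nw$ and $\varphi\notin\ell(v)$; $\varphi\,\mathsf U\,\psi\in\ell(w)$ implies some $v$ with $wR^nv$ and $\psi\in\ell(v)$; $\varphi\,\mathsf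 S\,\psi\in\ell(w)$ implies some $v$ with $vR^nw$ and $\psi\in\ell(v)$. A $\Sigma$-labelled system is a $\Sigma$-labelled space with a bi-serial, fully confluent, convex, sensible relation $R$; it is a $\Sigma$-quasimodel if moreover $R$ is $\omega$-sensible. *)

From Stdlib Require Import ZArith List.

Inductive formula : Type :=
| Var  : nat -> formula
| And  : formula -> formula -> formula
| Or   : formula -> formula -> formula
| Imp  : formula -> formula -> formula
| Coimp : formula -> formula -> formula
| Next : formula -> formula
| Prev : formula -> formula
| Glob : formula -> formula
| Hist : formula -> formula
| Until : formula -> formula -> formula
| Since : formula -> formula -> formula.

Section Semantics.
Variables (W T : Type) (le : W -> W -> Prop) (S Sinv : T -> T)
          (V : nat -> W -> T -> Prop).

Definition Spow (n : nat) (t : T) : T := Nat.iter n S t.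
Definition Sinvpow (n : nat) (t : T) : T := Nat.iter n Sinv t.

Fixpoint sat (f : formula) (w : W) (t : T) : Prop :=
  match f with
  | Var p => V p w t
  | And a b => sat a w t /\ sat b w t
  | Or a b => sat a w t \/ sat b w t
  | Imp a b => forall v, le v w -> sat a v t -> sat b v t
  | Coimp a b => exists v, le w v /\ sat a v t /\ ~ sat b v t
  | Next a => sat a w (S t)
  | Prev a => sat a w (Sinv t)
  | Glob a => forall n : nat, sat a w (Spow n t)
  | Hist a => forall n : nat, sat a w (Sinvpow n t)
  | Until a b => exists n : nat, sat b w (Spow n t) /\
                   forall i : nat, (i < n)%nat -> sat a w (Spow i t)
  | Since a b => exists n : nat, sat b w (Sinvpow n t) /\
                   forall i : nat, (i < n)%nat -> sat a w (Sinvpow i t)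
  end.

Definition linear_order : Prop :=
  (forall x, le x x) /\
  (forall x y z, le x y -> le y z -> le x z) /\
  (forall x y, le x y -> le y x -> x = y) /\
  (forall x y, le x y \/ le y x).

(* (W,T,<=,S,[[.]]) is a bi-relational model: (W,<=) linear, S a bijection
   of T with inverse Sinv, and valuations of variables downward closed in
   the first coordinate; [[.]] is then given by [sat]. *)
Definition birelational_model : Prop :=
  linear_order /\
  (forall t, Sinv (S t) = t) /\ (forall t, S (Sinv t) = t) /\
  (forall p w v t, le v w -> V p w t -> V p v t).

Definition falsifies (f : formula) : Prop :=
  exists w t, ~ sat f w t.
End Semantics.

Definition fset := formula -> Prop.

Definition finite_fset (Sg : fset) : Prop :=
  exists l : list formula, forall f, Sg f <-> In f l.

Definition children (f : formula) : list formula :=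
  match f with
  | Var _ => nil
  | And a b | Or a b | Imp a b | Coimp a b | Until a b | Since a b => a :: b :: nil
  | Next a | Prev a | Glob a | Hist a => a :: nil
  end.

Definition subformula_closed (Sg : fset) : Prop :=
  forall f g, Sg f -> In g (children f) -> Sg g.

Definition is_type (Sg Phi : fset) : Prop :=
  (forall f, Phi f -> Sg f) /\
  (forall a b, Sg (And a b) -> (Phi (And a b) <-> Phi a /\ Phi b)) /\
  (forall a b, Sg (Or a b) -> (Phi (Or a b) <-> Phi a \/ Phi b)) /\
  (forall a b, Sg (Imp a b) ->
     (Phi (Imp a b) -> ~ Phi a \/ Phi b) /\ (Phi b -> Phi (Imp a b))) /\
  (forall a b, Sg (Coimp a b) ->
     (Phi (Coimp a b) -> Phi a) /\ (Phi a -> ~ Phi b -> Phi (Coimp a b))).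

Section Quasimodels.
Variables (Sg : fset) (W : Type) (le : W -> W -> Prop) (l : W -> fset)
          (R : W -> W -> Prop).

Definition partial_order : Prop :=
  (forall x, le x x) /\
  (forall x y z, le x y -> le y z -> le x z) /\
  (forall x y, le x y -> le y x -> x = y).

(* disjoint union of linear posets: W is partitioned into blocks (fibres of
   f), no order relations across blocks, each block linearly ordered *)
Definition locally_linear : Prop :=
  partial_order /\
  exists (I : Type) (f : W -> I),
    (forall x y, le x y -> f x = f y) /\
    (forall x y, f x = f y -> le x y \/ le y x).

Definition labelled_space : Prop :=
  locally_linear /\
  (forall w, is_type Sg (l w)) /\
  (forall w v f, le w v -> l v f -> l w f) /\
  (forall w a b, Sg (Imp a b) -> ~ l w (Imp a b) ->
     exists v, le v w /\ l v a /\ ~ l v b) /\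
  (forall w a b, l w (Coimp a b) ->
     exists v, le w v /\ l v a /\ ~ l v b).

Definition convex_set (A : W -> Prop) : Prop :=
  forall x y z, A x -> A z -> le x y -> le y z -> A y.

Definition convex_rel : Prop :=
  (forall x, convex_set (fun y => R x y)) /\
  (forall y, convex_set (fun x => R x y)).

Definition fully_confluent : Prop :=
  (forall x x' y', le x x' -> R x' y' -> exists y, R x y /\ le y y') /\
  (forall x x' y, le x x' -> R x y -> exists y', R x' y' /\ le y y') /\
  (forall x' y' y, R x' y' -> le y y' -> exists x, le x x' /\ R x y) /\
  (forall x y y', R x y -> le y y' -> exists x', le x x' /\ R x' y').

Definition bi_serial : Prop :=
  forall w, (exists v, R w v) /\ (exists u, R u w).

Definition sensible_pair (Phi Psi : fset) : Prop :=
  (forall a, Sg (Next a) -> (Phi (Next a) <-> Psi a)) /\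
  (forall a, Sg (Prev a) -> (Psi (Prev a) <-> Phi a)) /\
  (forall a, Sg (Glob a) -> (Phi (Glob a) <-> Phi a /\ Psi (Glob a))) /\
  (forall a, Sg (Hist a) -> (Psi (Hist a) <-> Psi a /\ Phi (Hist a))) /\
  (forall a b, Sg (Until a b) ->
     (Phi (Until a b) <-> Phi b \/ (Phi a /\ Psi (Until a b)))) /\
  (forall a b, Sg (Since a b) ->
     (Psi (Since a b) <-> Psi b \/ (Psi a /\ Phi (Since a b)))).

Definition sensible_rel : Prop :=
  forall w v, R w v -> sensible_pair (l w) (l v).

Fixpoint Rpow (n : nat) (x y : W) : Prop :=
  match n with
  | O => x = y
  | S n' => exists z, R x z /\ Rpow n' z y
  end.

Definition omega_sensible : Prop :=
  (forall w a, Sg (Glob a) -> ~ l w (Glob a) ->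
     exists n v, Rpow n w v /\ ~ l v a) /\
  (forall w a, Sg (Hist a) -> ~ l w (Hist a) ->
     exists n v, Rpow n v w /\ ~ l v a) /\
  (forall w a b, l w (Until a b) -> exists n v, Rpow n w v /\ l v b) /\
  (forall w a b, l w (Since a b) -> exists n v, Rpow n v w /\ l v b).

Definition labelled_system : Prop :=
  labelled_space /\ bi_serial /\ fully_confluent /\ convex_rel /\ sensible_rel.

Definition quasimodel : Prop := labelled_system /\ omega_sensible.
End Quasimodels.

From Stdlib Require Import ZArith List.
From Stdlib Require Import QArith Qcanon Lqa Lia Classical ClassicalEpsilon Sorting Cantor.
Import ListNotations.

(** The model has worlds [Qc] (the rationals) at every time [z : Z]. For each time we
    build a _column_ [col z : Qc -> W]: a map into one component of the quasimodel that
    is monotone for the labels, meets every label class of that component, and whose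
    classes are open intervals of [Qc]. A variable holds at [(w, z)] iff it is in the
    label of [col z w]; a truth lemma then shows the same for every formula of [Sg]. *)

(** * Gap cuts of the rationals *)

(** [2 a^2 = b^2] forces [b = 0] in [Z]: the irrationality of [sqrt 2],
    by descent on [|b|]. *)
Lemma double_square_Z (a b : Z) : (2 * a * a = b * b)%Z -> b = 0%Z.
Proof.
  revert a b.
  enough (Hbound : forall n (a b : Z), (Z.abs b < Z.of_nat n)%Z -> (2 * a * a = b * b)%Z -> b = 0%Z)
    by (intros a b; apply (Hbound (S (Z.to_nat (Z.abs b)))); lia).
  induction n as [|n IH]; intros a b Hb Heq; [lia|].
  destruct (Z.eq_dec b 0) as [|Hb0]; [assumption|exfalso].
  destruct (Z.Even_or_Odd b) as [[c ->]|[c ->]]; [|nia].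
  assert (Hc : (2 * c * c = a * a)%Z) by nia.
  assert (a = 0%Z) as ->; [|nia].
  apply (IH c a); [|exact Hc]. assert (a * a < 4 * c * c)%Z by nia.
  assert (Z.abs (2 * c) = 2 * Z.abs c)%Z by lia. nia.
Qed.

Lemma double_square_Q (s d : Q) : (0 < d)%Q -> ~ (2 * s * s == d * d)%Q.
Proof.
  destruct s as [sn sd], d as [dn dd]. unfold Qlt, Qeq, Qmult; cbn [Qnum Qden].
  rewrite !Pos2Z.inj_mul. intros Hd Heq.
  assert (Hsq : (2 * (sn * Zpos dd) * (sn * Zpos dd) = (dn * Zpos sd) * (dn * Zpos sd))%Z) by nia.
  apply double_square_Z in Hsq. nia.
Qed.

Lemma Q2Qc_this (q : Q) : (this (Q2Qc q) == q)%Q.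
Proof. apply Qred_correct. Qed.

Ltac splits := repeat match goal with |- _ /\ _ => split end.

Local Open Scope Qc_scope.

Ltac qclra := unfold Qcle, Qclt in *; rewrite ?Q2Qc_this in *; lra.

(** Cutting a chain at gaps keeps every piece an open interval. *)
Definition gap_between (u v : Qc) (G : Qc -> Prop) : Prop :=
  (forall x y, x <= y -> G y -> G x) /\ G u /\ ~ G v /\
  (forall x, G x -> exists y, x < y /\ G y) /\
  (forall x, ~ G x -> exists y, y < x /\ ~ G y).

(** Between any two rationals lies a gap: the cut at [u + (v - u) / sqrt 2]. *)
Lemma gap_exists (u v : Qc) : u < v -> exists G, gap_between u v G.
Proof.
  intros Huv.
  set (d := (this v - this u)%Q).
  assert (Hd : (0 < d)%Q) by (unfold d; qclra).
  exists (fun x => let s := (this x - this u)%Q in (s < 0)%Q \/ (2 * s * s < d * d)%Q).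
  cbv zeta. repeat split.
  - intros x y Hxy [Hy|Hy]; [left; qclra|].
    destruct (Qlt_le_dec (this x - this u) 0); [left; auto|right]. unfold Qcle in Hxy. nra.
  - right. nra.
  - intros [H|H]; unfold d in *; [qclra|nra].
  - intros x [Hx|Hx].
    + exists u. split; [qclra|]. right. nra.
    + destruct (Qlt_le_dec (this x - this u) 0) as [Hs|Hs].
      { exists u. split; [qclra|]. right. nra. }
      set (s := (this x - this u)%Q) in *.
      set (e := ((d * d - 2 * s * s) / (8 * d))%Q).
      assert (He : (e * (8 * d) == d * d - 2 * s * s)%Q) by (unfold e; field; lra).
      assert (He0 : (0 < e)%Q) by (unfold e; apply Qlt_shift_div_l; lra).
      assert ((s < d)%Q) by nra.
      exists (Q2Qc (this x + e)). split; [qclra|]. right.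
      rewrite Q2Qc_this. setoid_replace (this x + e - this u)%Q with (s + e)%Q by (unfold s; ring).
      nra.
  - intros x Hx. apply Decidable.not_or in Hx as [H1 H2].
    apply Qnot_lt_le in H1, H2.
    set (s := (this x - this u)%Q) in *.
    assert (H3 : (d * d < 2 * s * s)%Q).
    { destruct (Qle_lt_or_eq _ _ H2) as [Hlt|Heq]; [exact Hlt|].
      exfalso. apply (double_square_Q s d Hd). symmetry. exact Heq. }
    assert (Hs : (0 < s)%Q) by nra.
    set (e := ((2 * s * s - d * d) / (8 * s))%Q).
    assert (He : (e * (8 * s) == 2 * s * s - d * d)%Q) by (unfold e; field; lra).
    assert (He0 : (0 < e)%Q) by (unfold e; apply Qlt_shift_div_l; lra).
    exists (Q2Qc (this x - e)). split; [qclra|].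
    rewrite Q2Qc_this. setoid_replace (this x - e - this u)%Q with (s - e)%Q by (unfold s; ring).
    intros [H|H]; nra.
Qed.

(** * Partitioning the rationals into consecutive open intervals *)

Lemma least_index (P : nat -> Prop) (m : nat) :
  exists t, (t <= m)%nat /\ ((t < m)%nat -> P t) /\ (forall i, (i < t)%nat -> ~ P i).
Proof.
  induction m as [|m (t & Htm & HPt & Hlt)].
  - exists 0%nat. repeat split; intros; lia.
  - destruct (Nat.eq_dec t m) as [->|Htm']; [destruct (classic (P m)) as [HPm|HPm]|].
    + exists m. repeat split; auto.
    + exists (S m). repeat split; [lia|intros; lia|].
      intros i Hi. destruct (Nat.eq_dec i m) as [->|]; [exact HPm|apply Hlt; lia].
    + exists t. repeat split; [lia|intros; apply HPt; lia|exact Hlt].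
Qed.

(** [tau] cuts the rationals into consecutive nonempty open intervals [tau^-1 j], [j <= m]. *)
Definition interval_partition (m : nat) (tau : Qc -> nat) : Prop :=
  (forall w, (tau w <= m)%nat) /\ (forall w v, w <= v -> (tau w <= tau v)%nat) /\
  (forall j, (j <= m)%nat -> exists w, tau w = j) /\
  (forall w, exists u v, u < w /\ w < v /\ tau u = tau w /\ tau v = tau w).

Section Partition.
Variables (m : nat) (A : nat -> Qc -> Prop) (E : Qc -> Qc -> Prop) (r : Qc) (jr : nat).
Hypothesis E_sym : forall x y, E x y -> E y x.
Hypothesis E_convex : forall x y z, x <= y -> y <= z -> E x z -> E x y /\ E y z.
Hypothesis E_open : forall w, exists u v, u < w /\ w < v /\ E u w /\ E v w.
Hypothesis A_saturated : forall j x y, A j x -> E x y -> A j y.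
Hypothesis A_convex : forall j x y z, A j x -> A j z -> x <= y -> y <= z -> A j y.
Hypothesis A_lower : forall j k b, (j < k <= m)%nat -> A k b -> exists a, A j a /\ a <= b.
Hypothesis A_upper : forall j k a, (j < k <= m)%nat -> A j a -> exists b, A k b /\ a <= b.
Hypothesis A_cover : forall w, exists j, (j <= m)%nat /\ A j w.
Hypothesis jr_le : (jr <= m)%nat.
Hypothesis A_r : A jr r.

Lemma A_open j w : A j w -> (exists u, u < w /\ A j u) /\ (exists v, w < v /\ A j v).
Proof.
  intros Hw. destruct (E_open w) as (u & v & Hu & Hv & Euw & Evw).
  split; [exists u|exists v]; split; eauto.
Qed.

Lemma below_A_gap j w : (forall a, A j a -> a < w) -> exists u, u < w /\ forall a, A j a -> a < u.
Proof.
  intros Hbelow. destruct (E_open w) as (u & _ & Hu & _ & Euw & _).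
  exists u. split; [exact Hu|]. intros a Ha. destruct (Qclt_le_dec a u) as [|Hua]; [assumption|].
  exfalso. assert (Hwa : a < w) by auto.
  destruct (E_convex u a w Hua (Qclt_le_weak _ _ Hwa) Euw) as [_ Eaw].
  specialize (Hbelow w (A_saturated j a w Ha Eaw)). qclra.
Qed.

Lemma above_A_gap j w : (forall a, A j a -> w < a) -> exists v, w < v /\ forall a, A j a -> v < a.
Proof.
  intros Habove. destruct (E_open w) as (_ & v & _ & Hv & _ & Evw).
  exists v. split; [exact Hv|]. intros a Ha. destruct (Qclt_le_dec v a) as [|Hav]; [assumption|].
  exfalso. assert (Hwa : w < a) by auto.
  destruct (E_convex w a v (Qclt_le_weak _ _ Hwa) Hav (E_sym _ _ Evw)) as [Ewa _].
  specialize (Habove w (A_saturated j a w Ha (E_sym _ _ Ewa))). qclra.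
Qed.

Lemma lower_A_gap j w : (exists a, A j a /\ a <= w) -> exists u, u < w /\ exists a, A j a /\ a <= u.
Proof.
  intros (a & Ha & Haw). destruct (E_open w) as (u & _ & Hu & _ & Euw & _).
  exists u. split; [exact Hu|]. destruct (Qclt_le_dec u a) as [Hua|Hau].
  - exists u. split; [|apply Qcle_refl].
    destruct (E_convex u a w (Qclt_le_weak _ _ Hua) Haw Euw) as [Eua _]. eauto.
  - exists a. auto.
Qed.

Lemma A_next j a : (j < m)%nat -> A j a -> exists b, A (S j) b /\ a < b.
Proof.
  intros Hj Ha. destruct (A_upper j (S j) a ltac:(lia) Ha) as (b & Hb & Hab).
  destruct (Qclt_le_dec a b) as [|Hba]; [eauto|].
  rewrite <- (Qcle_antisym _ _ Hab Hba) in Hb. destruct (A_open _ _ Hb) as [_ (v & ? & ?)]. eauto.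
Qed.

Lemma A_prev j b : (j < m)%nat -> A (S j) b -> exists a, A j a /\ a < b.
Proof.
  intros Hj Hb. destruct (A_lower j (S j) b ltac:(lia) Hb) as (a & Ha & Hab).
  destruct (Qclt_le_dec a b) as [|Hba]; [eauto|].
  rewrite (Qcle_antisym _ _ Hab Hba) in Ha. destruct (A_open _ _ Ha) as [(u & ? & ?) _]. eauto.
Qed.

Definition next_point (j : nat) (a : Qc) : Qc :=
  epsilon (inhabits a) (fun b => A (S j) b /\ a < b).
Definition prev_point (j : nat) (b : Qc) : Qc :=
  epsilon (inhabits b) (fun a => A j a /\ a < b).

Fixpoint points_up (i : nat) : Qc :=
  match i with O => r | S i => next_point (jr + i) (points_up i) end.
Fixpoint points_down (i : nat) : Qc :=
  match i with O => r | S i => prev_point (jr - S i) (points_down i) end.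

Lemma next_point_spec j a : (j < m)%nat -> A j a -> A (S j) (next_point j a) /\ a < next_point j a.
Proof. intros Hj Ha. unfold next_point. apply epsilon_spec, A_next; assumption. Qed.

Lemma prev_point_spec j b : (j < m)%nat -> A (S j) b -> A j (prev_point j b) /\ prev_point j b < b.
Proof. intros Hj Hb. unfold prev_point. apply epsilon_spec, A_prev; assumption. Qed.

Lemma points_up_in i : (jr + i <= m)%nat -> A (jr + i) (points_up i).
Proof.
  induction i as [|i IH]; intros Hi; [rewrite Nat.add_0_r; exact A_r|].
  rewrite Nat.add_succ_r. apply next_point_spec; [lia|apply IH; lia].
Qed.

Lemma points_up_lt i : (jr + S i <= m)%nat -> points_up i < points_up (S i).
Proof. intros Hi. apply next_point_spec; [lia|apply points_up_in; lia]. Qed.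

Lemma points_down_in i : (i <= jr)%nat -> A (jr - i) (points_down i).
Proof.
  induction i as [|i IH]; intros Hi; [rewrite Nat.sub_0_r; exact A_r|].
  apply prev_point_spec; [lia|]. replace (S (jr - S i)) with (jr - i)%nat by lia. apply IH. lia.
Qed.

Lemma points_down_lt i : (S i <= jr)%nat -> points_down (S i) < points_down i.
Proof.
  intros Hi. apply prev_point_spec; [lia|].
  replace (S (jr - S i)) with (jr - i)%nat by lia. apply points_down_in. lia.
Qed.

Definition point (j : nat) : Qc :=
  if Nat.ltb j jr then points_down (jr - j) else points_up (j - jr).

Lemma point_r : point jr = r.
Proof. unfold point. rewrite Nat.ltb_irrefl, Nat.sub_diag. reflexivity. Qed.

Lemma point_in j : (j <= m)%nat -> A j (point j).
Proof.
  intros Hj. unfold point. destruct (Nat.ltb_spec j jr).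
  - replace j with (jr - (jr - j))%nat at 1 by lia. apply points_down_in. lia.
  - replace j with (jr + (j - jr))%nat at 1 by lia. apply points_up_in. lia.
Qed.

Lemma point_lt j : (j < m)%nat -> point j < point (S j).
Proof.
  intros Hj. unfold point. destruct (Nat.ltb_spec j jr), (Nat.ltb_spec (S j) jr); try lia.
  - replace (jr - j)%nat with (S (jr - S j)) by lia. apply points_down_lt. lia.
  - replace (jr - j)%nat with 1%nat by lia. replace (S j - jr)%nat with 0%nat by lia.
    apply points_down_lt. lia.
  - replace (S j - jr)%nat with (S (j - jr)) by lia. apply points_up_lt. lia.
Qed.

Definition gap (j : nat) : Qc -> Prop :=
  epsilon (inhabits (fun _ => True)) (gap_between (point j) (point (S j))).

Lemma gap_spec j : (j < m)%nat -> gap_between (point j) (point (S j)) (gap j).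
Proof. intros Hj. unfold gap. apply epsilon_spec, gap_exists, point_lt, Hj. Qed.

Definition below_some (j : nat) (x : Qc) : Prop := exists a, A j a /\ x <= a.
Definition below_all (j : nat) (x : Qc) : Prop := forall a, A j a -> x < a.

(** [boundary j] is the set of points whose piece is at most [j]: the points lying
    below all of [A (S j)], and the points below some point of [A j] that lie before
    the chosen gap between [point j] and [point (S j)]. *)
Definition boundary (j : nat) (x : Qc) : Prop :=
  below_all (S j) x \/ (below_some j x /\ gap j x).

Lemma below_all_below_some j x : (j < m)%nat -> below_all (S j) x -> below_some j x.
Proof.
  intros Hj Hall. apply NNPP. intros Hnot.
  destruct (A_cover x) as (k & Hk & Hx).
  destruct (Nat.lt_trichotomy k j) as [Hkj|[->|Hkj]].
  - destruct (A_upper k j x ltac:(lia) Hx) as (b & Hb & Hxb). apply Hnot. exists b; auto.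
  - apply Hnot. exists x. split; [exact Hx|apply Qcle_refl].
  - destruct (Nat.eq_dec k (S j)) as [->|Hk'].
    + specialize (Hall x Hx). qclra.
    + destruct (A_lower (S j) k x ltac:(lia) Hx) as (a & Ha & Hax).
      specialize (Hall a Ha). qclra.
Qed.

Lemma boundary_below_some j x : (j < m)%nat -> boundary j x -> below_some j x.
Proof. intros Hj [Hall|[Hsome _]]; auto using below_all_below_some. Qed.

Lemma not_boundary_above j x : ~ boundary j x -> exists a, A (S j) a /\ a <= x.
Proof.
  intros Hx. apply NNPP. intros Hnot. apply Hx. left. intros a Ha.
  destruct (Qclt_le_dec x a); [assumption|]. exfalso. apply Hnot. exists a. auto.
Qed.

Lemma boundary_down j x y : (j < m)%nat -> x <= y -> boundary j y -> boundary j x.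
Proof.
  intros Hj Hxy [Hall|[(a & Ha & Hya) Hgap]].
  - left. intros a Ha. specialize (Hall a Ha). qclra.
  - right. split; [exists a; split; [exact Ha|qclra]|].
    destruct (gap_spec j Hj) as [Hdown _]. eauto.
Qed.

Lemma boundary_point j : (j < m)%nat -> boundary j (point j).
Proof.
  intros Hj. right. split; [exists (point j); split; [apply point_in; lia|apply Qcle_refl]|].
  apply (gap_spec j Hj).
Qed.

Lemma not_boundary_point j : (j < m)%nat -> ~ boundary j (point (S j)).
Proof.
  intros Hj [Hall|[_ Hgap]].
  - specialize (Hall _ (point_in (S j) Hj)). qclra.
  - apply (gap_spec j Hj). exact Hgap.
Qed.

Lemma boundary_nested j x : (S j < m)%nat -> boundary j x -> boundary (S j) x.
Proof.
  intros Hj [Hall|[Hsome Hgap]].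
  - left. intros b Hb. destruct (A_lower (S j) (S (S j)) b ltac:(lia) Hb) as (a & Ha & Hab).
    specialize (Hall a Ha). qclra.
  - assert (Hx : x < point (S j)).
    { destruct (Qclt_le_dec x (point (S j))) as [|Hle]; [assumption|].
      destruct (gap_spec j ltac:(lia)) as (Hdown & _ & Hnot & _). exfalso. eauto. }
    right. split.
    + exists (point (S j)). split; [apply point_in; lia|qclra].
    + destruct (gap_spec (S j) Hj) as (Hdown & Hpt & _). apply (Hdown x (point (S j))); [qclra|exact Hpt].
Qed.

Lemma boundary_nested_le i j x : (i <= j)%nat -> (j < m)%nat -> boundary i x -> boundary j x.
Proof.
  induction 1 as [|j Hij IH]; intros Hj Hx; [exact Hx|].
  apply boundary_nested; [lia|]. apply IH; [lia|exact Hx].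
Qed.

Lemma boundary_open j x : (j < m)%nat -> boundary j x -> exists y, x < y /\ boundary j y.
Proof.
  intros Hj [Hall|[(a & Ha & Hxa) Hgap]].
  - destruct (above_A_gap (S j) x Hall) as (v & Hv & Hallv). exists v. split; [exact Hv|]. left. exact Hallv.
  - destruct (A_open j a Ha) as [_ (v & Hav & Hv)].
    destruct (gap_spec j Hj) as (Hdown & _ & _ & Hmax & _). destruct (Hmax x Hgap) as (y & Hxy & Hy).
    destruct (Qclt_le_dec y v) as [Hyv|Hvy].
    + exists y. split; [exact Hxy|]. right. split; [exists v; split; [exact Hv|qclra]|exact Hy].
    + exists v. split; [qclra|]. right. split; [exists v; split; [exact Hv|apply Qcle_refl]|].
      exact (Hdown v y Hvy Hy).
Qed.

Lemma boundary_coopen j x : (j < m)%nat -> ~ boundary j x -> exists y, y < x /\ ~ boundary j y.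
Proof.
  intros Hj Hx.
  destruct (not_boundary_above j x Hx) as (a & Ha & Hax).
  destruct (lower_A_gap (S j) x (ex_intro _ a (conj Ha Hax))) as (u1 & Hu1 & a1 & Ha1 & Ha1u).
  assert (Hu2 : exists u2, u2 < x /\ ~ (below_some j u2 /\ gap j u2)).
  { destruct (classic (below_some j x)) as [Hsome|Hnone].
    - assert (Hgap : ~ gap j x) by (intros Hg; apply Hx; right; auto).
      destruct (gap_spec j Hj) as (_ & _ & _ & _ & Hmin). destruct (Hmin x Hgap) as (y & Hyx & Hy).
      exists y. split; [exact Hyx|]. tauto.
    - destruct (below_A_gap j x) as (u & Hux & Hallu).
      { intros b Hb. destruct (Qclt_le_dec b x) as [|Hxb]; [assumption|]. exfalso. apply Hnone. exists b. auto. }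
      exists u. split; [exact Hux|]. intros [(b & Hb & Hub) _]. specialize (Hallu b Hb). qclra. }
  destruct Hu2 as (u2 & Hu2 & Hnot2).
  destruct (Qclt_le_dec u1 u2) as [H12|H21].
  - exists u2. split; [exact Hu2|]. intros [Hall|Hsg]; [specialize (Hall a1 Ha1); qclra|contradiction].
  - exists u1. split; [exact Hu1|]. intros [Hall|[(b & Hb & Hub) Hgap]]; [specialize (Hall a1 Ha1); qclra|].
    apply Hnot2. split; [exists b; split; [exact Hb|qclra]|].
    destruct (gap_spec j Hj) as (Hdown & _). exact (Hdown u2 u1 H21 Hgap).
Qed.

Definition is_piece (x : Qc) (t : nat) : Prop :=
  (t <= m)%nat /\ ((t < m)%nat -> boundary t x) /\ (forall i, (i < t)%nat -> ~ boundary i x).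

Definition piece (x : Qc) : nat :=
  epsilon (inhabits O) (is_piece x).

Lemma piece_spec x : is_piece x (piece x).
Proof. unfold piece. apply epsilon_spec, least_index. Qed.

Lemma piece_le x : (piece x <= m)%nat.
Proof. apply piece_spec. Qed.

Lemma piece_least x i : (i < m)%nat -> boundary i x -> (piece x <= i)%nat.
Proof.
  intros Hi Hx. destruct (Nat.le_gt_cases (piece x) i) as [|Hlt]; [assumption|].
  exfalso. destruct (piece_spec x) as (_ & _ & Hbefore). exact (Hbefore i Hlt Hx).
Qed.

Lemma piece_mono x y : x <= y -> (piece x <= piece y)%nat.
Proof.
  intros Hxy. destruct (Nat.lt_ge_cases (piece y) m) as [Hy|Hy].
  - apply piece_least; [exact Hy|]. apply (boundary_down _ x y Hy Hxy). apply (piece_spec y), Hy.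
  - pose proof (piece_le x). lia.
Qed.

Lemma piece_point j : (j <= m)%nat -> piece (point j) = j.
Proof.
  intros Hj. apply Nat.le_antisymm.
  - destruct (Nat.eq_dec j m) as [->|]; [apply piece_le|].
    apply piece_least; [lia|]. apply boundary_point. lia.
  - destruct (Nat.le_gt_cases j (piece (point j))) as [|Hlt]; [assumption|]. exfalso.
    destruct j as [|j]; [lia|].
    apply (not_boundary_point j); [lia|]. apply (boundary_nested_le (piece (point (S j))) j); [lia|lia|].
    apply (piece_spec (point (S j))). lia.
Qed.

Lemma piece_in x : A (piece x) x.
Proof.
  destruct (piece_spec x) as (Hle & Hbd & Hbefore). set (j := piece x) in *.
  assert (Hup : below_some j x).
  { destruct (Nat.lt_ge_cases j m) as [Hjm|Hjm]; [apply boundary_below_some; auto|].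
    destruct (A_cover x) as (k & Hk & Hx). destruct (Nat.eq_dec k j) as [<-|].
    - exists x. split; [exact Hx|apply Qcle_refl].
    - destruct (A_upper k j x ltac:(lia) Hx) as (b & Hb & Hxb). exists b. auto. }
  assert (Hdown : exists a, A j a /\ a <= x).
  { destruct j as [|j'] eqn:Ej.
    - destruct (A_cover x) as (k & Hk & Hx). destruct (Nat.eq_dec k 0) as [->|].
      + exists x. split; [exact Hx|apply Qcle_refl].
      + destruct (A_lower 0 k x ltac:(lia) Hx) as (b & Hb & Hbx). exists b. auto.
    - apply not_boundary_above, Hbefore. lia. }
  destruct Hup as (a1 & Ha1 & Hxa1), Hdown as (a2 & Ha2 & Ha2x).
  exact (A_convex j a2 x a1 Ha2 Ha1 Ha2x Hxa1).
Qed.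

Lemma piece_open x : exists u v, u < x /\ x < v /\ piece u = piece x /\ piece v = piece x.
Proof.
  assert (Hright : exists v, x < v /\ piece v = piece x).
  { destruct (Nat.lt_ge_cases (piece x) m) as [Hx|Hx].
    - destruct (boundary_open (piece x) x Hx (proj1 (proj2 (piece_spec x)) Hx)) as (v & Hxv & Hv).
      exists v. split; [exact Hxv|]. apply Nat.le_antisymm; [apply piece_least; auto|].
      apply piece_mono. qclra.
    - set (v := Q2Qc (this x + 1)). assert (Hxv : x < v) by (unfold v; qclra).
      exists v. split; [exact Hxv|]. pose proof (piece_le v). pose proof (piece_mono x v ltac:(qclra)). lia. }
  assert (Hleft : exists u, u < x /\ piece u = piece x).
  { destruct (piece x) as [|j] eqn:Ej.
    - set (u := Q2Qc (this x - 1)). assert (Hux : u < x) by (unfold u; qclra).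
      exists u. split; [exact Hux|]. pose proof (piece_mono u x ltac:(qclra)). lia.
    - assert (Hj : (j < m)%nat) by (pose proof (piece_le x); lia).
      assert (Hx : ~ boundary j x) by (apply (piece_spec x); lia).
      destruct (boundary_coopen j x Hj Hx) as (u & Hux & Hu). exists u. split; [exact Hux|].
      apply Nat.le_antisymm; [rewrite <- Ej; apply piece_mono; qclra|].
      destruct (Nat.le_gt_cases (S j) (piece u)) as [|Hlt]; [assumption|]. exfalso.
      apply Hu, (boundary_nested_le (piece u) j); [lia|lia|]. apply (piece_spec u). lia. }
  destruct Hright as (v & ? & ?), Hleft as (u & ? & ?). exists u, v. auto.
Qed.

Theorem partition_exists :
  exists tau, interval_partition m tau /\ (forall w, A (tau w) w) /\ tau r = jr.
Proof.
  exists piece. split; [|split; [apply piece_in|rewrite <- point_r; apply piece_point, jr_le]].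
  repeat split; [apply piece_le|apply piece_mono| |apply piece_open].
  intros j Hj. exists (point j). apply piece_point, Hj.
Qed.

End Partition.

(** * Dovetailing finite blocks into an infinite sequence *)

Fixpoint chain {X : Type} (ok : X -> Prop) (link : X -> X -> Prop) (x : X) (xs : list X) : Prop :=
  match xs with
  | [] => True
  | y :: ys => link x y /\ ok y /\ chain ok link y ys
  end.

(** An infinite sequence of [link]-steps meets each of countably many tasks infinitely
    often, provided every task can be met by some finite block from any point: at stage
    [k] the block for the [k]-th scheduled task is appended, and the schedule visits
    each task at arbitrarily late stages. *)
Section Dovetail.
Variables (X Task : Type) (ok : X -> Prop) (link : X -> X -> Prop) (pend dn : Task -> X -> Prop).
Variable enum : nat -> Task.
Hypothesis enum_surj : forall tk, exists i, enum i = tk.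
Hypothesis block_exists : forall x tk, ok x ->
  exists xs, xs <> [] /\ chain ok link x xs /\ (pend tk x -> Exists (dn tk) (x :: xs)).
Variable x0 : X.
Hypothesis ok_x0 : ok x0.

Definition schedule (k : nat) : Task := enum (fst (Cantor.of_nat k)).

Lemma schedule_often tk t : exists k, (t <= k)%nat /\ schedule k = tk.
Proof.
  destruct (enum_surj tk) as (i & Hi). exists (Cantor.to_nat (i, t)). split.
  - pose proof (Cantor.to_nat_non_decreasing i t). lia.
  - unfold schedule. rewrite Cantor.cancel_of_to. exact Hi.
Qed.

Definition good_block (x : X) (tk : Task) (xs : list X) : Prop :=
  xs <> [] /\ chain ok link x xs /\ (pend tk x -> Exists (dn tk) (x :: xs)).

Definition block_for (x : X) (tk : Task) : list X :=
  epsilon (inhabits []) (fun xs => ok x -> good_block x tk xs).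

Lemma block_for_spec x tk : ok x -> good_block x tk (block_for x tk).
Proof.
  intros Hx. unfold block_for.
  refine (epsilon_spec (inhabits []) (fun xs => ok x -> good_block x tk xs) _ Hx).
  destruct (block_exists x tk Hx) as (xs & Hxs). exists xs. intros _. exact Hxs.
Qed.

(** A state is the current element, the rest of the current block, and the stage. *)
Definition state : Type := (X * list X * nat)%type.

Definition advance (st : state) : state :=
  match st with
  | (x, y :: ys, k) => (y, ys, k)
  | (x, [], k) => match block_for x (schedule k) with
                  | y :: ys => (y, ys, S k)
                  | [] => (x, [], S k)
                  end
  end.

Fixpoint run (t : nat) : state :=
  match t with O => (x0, [], O) | S t => advance (run t) end.

Definition run_seq (t : nat) : X := fst (fst (run t)).

Definition run_invariant (st : state) : Prop :=
  let '(x, xs, _) := st in ok x /\ chain ok link x xs.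

Lemma advance_invariant st : run_invariant st ->
  run_invariant (advance st) /\ link (fst (fst st)) (fst (fst (advance st))).
Proof.
  destruct st as [[x [|y ys]] k]; simpl; intros [Hx Hxs].
  - destruct (block_for_spec x (schedule k) Hx) as (Hne & Hchain & _).
    destruct (block_for x (schedule k)) as [|y ys]; [congruence|].
    simpl in Hchain |- *. tauto.
  - tauto.
Qed.

Lemma run_invariant_all t : run_invariant (run t).
Proof. induction t as [|t IH]; [simpl; auto|apply advance_invariant, IH]. Qed.

Lemma run_seq_ok t : ok (run_seq t).
Proof. unfold run_seq. pose proof (run_invariant_all t) as H. destruct (run t) as [[x xs] k]. apply H. Qed.

Lemma run_seq_link t : link (run_seq t) (run_seq (S t)).
Proof. apply (advance_invariant (run t)), run_invariant_all. Qed.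

Lemma run_block xs : forall t x k, run t = (x, xs, k) ->
  (exists y, run (t + length xs) = (y, [], k)) /\
  forall i, (i <= length xs)%nat -> run_seq (t + i) = nth i (x :: xs) x.
Proof.
  induction xs as [|y ys IH]; intros t x k Ht.
  - rewrite Nat.add_0_r. split; [exists x; exact Ht|].
    intros i Hi. simpl in Hi. replace i with 0%nat by lia. rewrite Nat.add_0_r. unfold run_seq. rewrite Ht. reflexivity.
  - assert (Ht' : run (S t) = (y, ys, k)) by (simpl; rewrite Ht; reflexivity).
    destruct (IH (S t) y k Ht') as [Hend Hseq]. split.
    + replace (t + length (y :: ys))%nat with (S t + length ys)%nat by (simpl; lia). exact Hend.
    + intros [|i] Hi.
      * rewrite Nat.add_0_r. unfold run_seq. rewrite Ht. reflexivity.
      * replace (t + S i)%nat with (S t + i)%nat by lia. rewrite Hseq by (simpl in Hi; lia).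
        change (nth i (y :: ys) y = nth i (y :: ys) x). apply nth_indep. simpl in Hi |- *. lia.
Qed.

Lemma stage_start k : exists s x, (k <= s)%nat /\ run s = (x, [], k).
Proof.
  induction k as [|k (s & x & Hks & Hs)]; [exists 0%nat, x0; auto|].
  destruct (block_for_spec x (schedule k)) as (Hne & _).
  { pose proof (run_invariant_all s) as H. rewrite Hs in H. apply H. }
  destruct (block_for x (schedule k)) as [|y ys] eqn:Eb; [congruence|].
  assert (Hs' : run (S s) = (y, ys, S k)) by (simpl; rewrite Hs; simpl; rewrite Eb; reflexivity).
  destruct (run_block ys (S s) y (S k) Hs') as [(z & Hz) _].
  exists (S s + length ys)%nat, z. split; [lia|exact Hz].
Qed.

Theorem dovetail : exists f : nat -> X,
  f O = x0 /\ (forall t, ok (f t)) /\ (forall t, link (f t) (f (S t))) /\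
  forall tk t, exists s, (t <= s)%nat /\ (pend tk (f s) -> exists n, dn tk (f (s + n)%nat)).
Proof.
  exists run_seq. splits; [reflexivity|apply run_seq_ok|apply run_seq_link|].
  intros tk t. destruct (schedule_often tk t) as (k & Htk & Hk).
  destruct (stage_start k) as (s & x & Hks & Hs).
  exists s. split; [lia|]. intros Hpend.
  assert (Hx : run_seq s = x) by (unfold run_seq; rewrite Hs; reflexivity). rewrite Hx in Hpend.
  pose proof (run_invariant_all s) as Hinv. rewrite Hs in Hinv.
  destruct (block_for_spec x tk (proj1 Hinv)) as (Hne & _ & Hdone).
  apply Hdone, Exists_nth in Hpend as (i & d & Hi & Hdn).
  destruct (block_for x tk) as [|y ys] eqn:Eb; [congruence|].
  assert (Hs' : run (S s) = (y, ys, S k)) by (simpl; rewrite Hs; simpl; rewrite Hk, Eb; reflexivity).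
  destruct (run_block ys (S s) y (S k) Hs') as [_ Hseq].
  destruct i as [|i].
  - exists 0%nat. rewrite Nat.add_0_r, Hx. exact Hdn.
  - exists (S i). replace (s + S i)%nat with (S s + i)%nat by lia. rewrite Hseq by (simpl in Hi; lia).
    simpl in Hdn. rewrite (nth_indep (y :: ys) y d); [exact Hdn|simpl in Hi |- *; lia].
Qed.

End Dovetail.

(** * Columns: chains of worlds indexed by the rationals *)

Section Columns.
Variables (W : Type) (le : W -> W -> Prop) (l : W -> fset) (sgl : list formula).
Hypothesis le_refl : forall x, le x x.
Hypothesis le_trans : forall x y z, le x y -> le y z -> le x z.
Hypothesis comparable_trans_ax :
  forall x y z, (le x y \/ le y x) -> (le y z \/ le z y) -> le x z \/ le z x.
Hypothesis label_mono : forall w v f, le w v -> l v f -> l w f.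
Hypothesis label_finite : forall w f, l w f -> In f sgl.

Definition comparable (x y : W) : Prop := le x y \/ le y x.
Definition label_sub (x y : W) : Prop := forall f, l x f -> l y f.
Definition same_label (x y : W) : Prop := forall f, l x f <-> l y f.
Definition strictly_below (x y : W) : Prop := le x y /\ ~ same_label x y.

Lemma comparable_refl x : comparable x x.
Proof. left. apply le_refl. Qed.
Lemma comparable_sym x y : comparable x y -> comparable y x.
Proof. unfold comparable. tauto. Qed.
Lemma comparable_trans x y z : comparable x y -> comparable y z -> comparable x z.
Proof. apply comparable_trans_ax. Qed.

Lemma same_label_refl x : same_label x x.
Proof. intros f. tauto. Qed.
Lemma same_label_sym x y : same_label x y -> same_label y x.
Proof. intros H f. specialize (H f). tauto. Qed.
Lemma same_label_trans x y z : same_label x y -> same_label y z -> same_label x z.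
Proof. intros H1 H2 f. specialize (H1 f). specialize (H2 f). tauto. Qed.
Lemma same_label_sub x y : same_label x y -> label_sub x y.
Proof. intros H f. apply H. Qed.
Lemma label_sub_antisym x y : label_sub x y -> label_sub y x -> same_label x y.
Proof. intros H1 H2 f. split; auto. Qed.
Lemma label_sub_trans x y z : label_sub x y -> label_sub y z -> label_sub x z.
Proof. intros H1 H2 f Hf. auto. Qed.
Lemma le_label_sub x y : le x y -> label_sub y x.
Proof. intros H f. apply label_mono, H. Qed.

Lemma comparable_label_le x y : comparable x y -> label_sub y x -> ~ same_label x y -> le x y.
Proof.
  intros [Hxy|Hyx] Hsub Hne; [exact Hxy|]. exfalso. apply Hne.
  apply label_sub_antisym; [apply le_label_sub, Hyx|exact Hsub].
Qed.

Definition code (x : W) : list formula :=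
  filter (fun f => if excluded_middle_informative (l x f) then true else false) sgl.

Lemma in_code x f : In f (code x) <-> l x f.
Proof.
  unfold code. rewrite filter_In. destruct (excluded_middle_informative (l x f)) as [Hf|Hf].
  - split; [tauto|]. intros _. split; [apply (label_finite x), Hf|reflexivity].
  - split; [intros [_ Hd]; discriminate|tauto].
Qed.

Lemma code_same_label x y : code x = code y -> same_label x y.
Proof. intros H f. rewrite <- !in_code, H. tauto. Qed.

Fixpoint sublists (s : list formula) : list (list formula) :=
  match s with
  | [] => [[]]
  | f :: s' => map (cons f) (sublists s') ++ sublists s'
  end.

Lemma filter_in_sublists (p : formula -> bool) s : In (filter p s) (sublists s).
Proof.
  induction s as [|f s IH]; simpl; [auto|].
  destruct (p f); apply in_or_app; [left; apply in_map|right]; exact IH.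
Qed.

Definition class_chain (a : W) (ys : list W) : Prop :=
  (forall y, In y ys -> comparable y a) /\ StronglySorted strictly_below ys /\
  (forall y, comparable y a -> exists y', In y' ys /\ same_label y y').

Definition lies_below (y0 x : W) : bool :=
  if excluded_middle_informative (le x y0) then true else false.

Lemma in_split_around y0 ys x :
  In x (filter (lies_below y0) ys ++ y0 :: filter (fun x => negb (lies_below y0 x)) ys) <->
  x = y0 \/ In x ys.
Proof.
  rewrite in_app_iff. simpl. rewrite !filter_In.
  destruct (lies_below y0 x); simpl; intuition congruence.
Qed.

Lemma StronglySorted_app (Rl : W -> W -> Prop) l1 l2 :
  StronglySorted Rl l1 -> StronglySorted Rl l2 ->
  (forall x y, In x l1 -> In y l2 -> Rl x y) -> StronglySorted Rl (l1 ++ l2).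
Proof.
  induction l1 as [|x l1 IH]; intros H1 H2 H12; simpl; [exact H2|].
  inversion H1 as [|? ? Hs Hall]; subst. constructor.
  - apply IH; auto. intros; apply H12; simpl; auto.
  - apply Forall_forall. intros y Hy. apply in_app_or in Hy as [Hy|Hy].
    + rewrite Forall_forall in Hall. auto.
    + apply H12; simpl; auto.
Qed.

Lemma StronglySorted_filter (Rl : W -> W -> Prop) p s :
  StronglySorted Rl s -> StronglySorted Rl (filter p s).
Proof.
  induction s as [|x s IH]; intros H; simpl; [constructor|]. inversion H as [|? ? Hs Hall]; subst.
  destruct (p x); [|auto]. constructor; [auto|].
  rewrite Forall_forall in *. intros y Hy. apply filter_In in Hy. apply Hall, Hy.
Qed.

Lemma insert_class a y0 ys :
  (forall y, In y ys -> comparable y a) -> StronglySorted strictly_below ys ->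
  comparable y0 a -> (forall y, In y ys -> ~ same_label y0 y) ->
  StronglySorted strictly_below
    (filter (lies_below y0) ys ++ y0 :: filter (fun x => negb (lies_below y0 x)) ys).
Proof.
  intros Hcomp Hsorted Hy0 Hnew.
  assert (Habove : forall y, In y ys -> lies_below y0 y = false -> le y0 y).
  { intros y Hy Hd. unfold lies_below in Hd. destruct (excluded_middle_informative (le y y0)); [discriminate|].
    destruct (comparable_trans y0 a y Hy0 (comparable_sym _ _ (Hcomp y Hy))); tauto. }
  assert (Hbelow : forall y, In y ys -> lies_below y0 y = true -> le y y0).
  { intros y Hy Hd. unfold lies_below in Hd. destruct (excluded_middle_informative (le y y0)); [assumption|discriminate]. }
  apply StronglySorted_app.
  - apply StronglySorted_filter, Hsorted.
  - constructor; [apply StronglySorted_filter, Hsorted|].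
    apply Forall_forall. intros y Hy. apply filter_In in Hy as [Hy Hd]. apply Bool.negb_true_iff in Hd.
    split; [auto|apply Hnew, Hy].
  - intros x y Hx Hy. apply filter_In in Hx as [Hx Hdx].
    assert (Hxy0 : le x y0) by auto.
    destruct Hy as [<-|Hy].
    + split; [exact Hxy0|]. intros Hsame. apply (Hnew x Hx), same_label_sym, Hsame.
    + apply filter_In in Hy as [Hy Hdy]. apply Bool.negb_true_iff in Hdy.
      split; [eauto|]. intros Hsame. apply (Hnew y Hy).
      apply label_sub_antisym.
      * apply label_sub_trans with x; [apply le_label_sub, Hxy0|apply same_label_sub, Hsame].
      * apply le_label_sub. auto.
Qed.

(** Each component has a finite sorted chain of class representatives: insert one
    representative for every code (sublist of [sgl]) that occurs in the component. *)
Lemma class_chain_codes (a : W) (cs : list (list formula)) : exists ys,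
  (forall y, In y ys -> comparable y a) /\ StronglySorted strictly_below ys /\
  (forall y, comparable y a -> In (code y) cs -> exists y', In y' ys /\ same_label y y').
Proof.
  induction cs as [|c cs (ys & Hcomp & Hsorted & Hcover)].
  - exists []. splits; [simpl; tauto|constructor|simpl; tauto].
  - destruct (classic (exists y0, comparable y0 a /\ code y0 = c /\
                                  forall y, In y ys -> ~ same_label y0 y))
      as [(y0 & Hy0 & Hc & Hnew)|Hnone].
    + exists (filter (lies_below y0) ys ++ y0 :: filter (fun x => negb (lies_below y0 x)) ys).
      splits.
      * intros y Hy. apply in_split_around in Hy as [->|Hy]; auto.
      * apply (insert_class a); auto.
      * intros y Hy [Hcy|Hc'].
        -- exists y0. rewrite in_split_around. split; [left; reflexivity|]. apply code_same_label. congruence.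
        -- destruct (Hcover y Hy Hc') as (y' & Hy' & Hsame). exists y'.
           rewrite in_split_around. auto.
    + exists ys. splits; auto. intros y Hy [Hcy|Hc']; [|auto].
      apply NNPP. intros Hno. apply Hnone. exists y. splits; auto.
      intros y' Hy' Hsame. apply Hno. exists y'. auto.
Qed.

Lemma class_chain_exists (a : W) : exists ys, class_chain a ys.
Proof.
  destruct (class_chain_codes a (sublists sgl)) as (ys & Hcomp & Hsorted & Hcover).
  exists ys. unfold class_chain. splits; auto. intros y Hy. apply Hcover; [exact Hy|apply filter_in_sublists].
Qed.

Section Chain.
Variables (a : W) (ys : list W).
Hypothesis Hchain : class_chain a ys.

Definition rep (j : nat) : W := nth j ys a.

Lemma rep_comparable j : (j < length ys)%nat -> comparable (rep j) a.
Proof. intros Hj. apply Hchain, nth_In, Hj. Qed.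

Lemma rep_strictly_below i j : (i < j < length ys)%nat -> strictly_below (rep i) (rep j).
Proof.
  destruct Hchain as (_ & Hsorted & _). unfold rep. clear Hchain.
  revert i j. induction Hsorted as [|x s Hs IH Hall]; intros i j Hij; simpl in Hij; [lia|].
  destruct i, j; try lia; simpl.
  - rewrite Forall_forall in Hall. apply Hall, nth_In. lia.
  - apply IH. lia.
Qed.

Lemma rep_label_mono i j : (i <= j < length ys)%nat -> label_sub (rep j) (rep i).
Proof.
  intros Hij. destruct (Nat.eq_dec i j) as [->|]; [intros f; auto|].
  apply le_label_sub, rep_strictly_below. lia.
Qed.

Lemma rep_cover y : comparable y a -> exists j, (j < length ys)%nat /\ same_label y (rep j).
Proof.
  intros Hy. destruct Hchain as (_ & _ & Hcover). destruct (Hcover y Hy) as (y' & Hy' & Hsame).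
  destruct (In_nth ys y' a Hy') as (j & Hj & Hjy). exists j. split; [exact Hj|]. unfold rep. rewrite Hjy. exact Hsame.
Qed.
End Chain.

Definition column (c : Qc -> W) : Prop :=
  (forall w v, comparable (c w) (c v)) /\
  (forall w v, w <= v -> label_sub (c v) (c w)) /\
  (forall w y, comparable y (c w) -> exists v, same_label (c v) y) /\
  (forall w, exists u v, u < w /\ w < v /\ same_label (c u) (c w) /\ same_label (c v) (c w)).

(** Following an interval partition through a class chain yields a column; at the single
    point [r] we may substitute any world [x] of the prescribed label class. *)
Definition chain_column (ys : list W) (a : W) (tau : Qc -> nat) (r : Qc) (x : W) (w : Qc) : W :=
  if Qc_eq_dec w r then x else rep a ys (tau w).

Lemma chain_column_spec a ys tau r x :
  class_chain a ys -> interval_partition (length ys - 1) tau ->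
  comparable x a -> same_label x (rep a ys (tau r)) ->
  column (chain_column ys a tau r x) /\ chain_column ys a tau r x r = x /\
  forall w, same_label (chain_column ys a tau r x w) (rep a ys (tau w)).
Proof.
  intros Hchain (Hbound & Hmono & Hsurj & Hopen) Hx Hxr.
  assert (Hlen : forall w, (tau w < length ys)%nat).
  { intros w. specialize (Hbound w). destruct ys; [|simpl in *; lia].
    destruct Hchain as (_ & _ & Hcover). destruct (Hcover a (comparable_refl a)) as (? & [] & _). }
  set (c := chain_column ys a tau r x).
  assert (Hrep : forall w, same_label (c w) (rep a ys (tau w))).
  { intros w. unfold c, chain_column. destruct (Qc_eq_dec w r) as [->|]; [exact Hxr|apply same_label_refl]. }
  assert (Hcomp : forall w, comparable (c w) a).
  { intros w. unfold c, chain_column. destruct (Qc_eq_dec w r); [exact Hx|apply rep_comparable; auto]. }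
  split; [|split; [unfold c, chain_column; destruct (Qc_eq_dec r r); congruence|exact Hrep]].
  unfold column. splits.
  - intros w v. apply comparable_trans with a; [|apply comparable_sym]; auto.
  - intros w v Hwv. apply label_sub_trans with (rep a ys (tau v)); [apply same_label_sub, Hrep|].
    apply label_sub_trans with (rep a ys (tau w)); [|apply same_label_sub, same_label_sym, Hrep].
    apply (rep_label_mono a ys Hchain). split; [apply Hmono, Hwv|apply Hlen].
  - intros w y Hy. destruct (rep_cover a ys Hchain y (comparable_trans _ _ _ Hy (Hcomp w))) as (j & Hj & Hsame).
    destruct (Hsurj j ltac:(lia)) as (v & Hv). exists v.
    apply same_label_trans with (rep a ys (tau v)); [apply Hrep|]. rewrite Hv. apply same_label_sym, Hsame.
  - intros w. destruct (Hopen w) as (u & v & Hu & Hv & Hue & Hve). exists u, v. do 2 (split; [assumption|]). split.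
    + apply same_label_trans with (rep a ys (tau u)); [apply Hrep|]. rewrite Hue. apply same_label_sym, Hrep.
    + apply same_label_trans with (rep a ys (tau v)); [apply Hrep|]. rewrite Hve. apply same_label_sym, Hrep.
Qed.

Lemma column_classes_convex c x y z : column c -> x <= y -> y <= z -> same_label (c x) (c z) ->
  same_label (c x) (c y) /\ same_label (c y) (c z).
Proof.
  intros (_ & Hmono & _) Hxy Hyz Hxz. split; apply label_sub_antisym.
  - apply label_sub_trans with (c z); [apply same_label_sub, Hxz|apply Hmono, Hyz].
  - apply Hmono, Hxy.
  - apply label_sub_trans with (c x); [apply Hmono, Hxy|apply same_label_sub, Hxz].
  - apply Hmono, Hyz.
Qed.

(** Every world starts a column: partition [Qc] with all the sets [A j] equal to [Qc],
    and a single equivalence class. *)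
Lemma column_through (w0 : W) : exists c, column c /\ c (Q2Qc 0) = w0.
Proof.
  destruct (class_chain_exists w0) as (ys & Hchain).
  destruct (rep_cover w0 ys Hchain w0 (comparable_refl w0)) as (j0 & Hj0 & Hsame).
  destruct (partition_exists (length ys - 1) (fun _ _ => True) (fun _ _ => True) (Q2Qc 0) j0)
    as (tau & Htau & _ & Htau0).
  - intros; exact I.
  - intros; split; exact I.
  - intros w. exists (Q2Qc (this w - 1)), (Q2Qc (this w + 1)). splits; qclra.
  - intros; exact I.
  - intros; exact I.
  - intros j k b _ _. exists b. split; [exact I|apply Qcle_refl].
  - intros j k b _ _. exists b. split; [exact I|apply Qcle_refl].
  - intros w. exists 0%nat. split; [lia|exact I].
  - lia.
  - exact I.
  - exists (chain_column ys w0 tau (Q2Qc 0) w0).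
    destruct (chain_column_spec w0 ys tau (Q2Qc 0) w0) as (Hcol & Hr & _); auto using comparable_refl.
    rewrite Htau0. exact Hsame.
Qed.

Section Step.
Variable R : W -> W -> Prop.
Hypothesis forth_down : forall x x' y', le x x' -> R x' y' -> exists y, R x y /\ le y y'.
Hypothesis forth_up : forall x x' y, le x x' -> R x y -> exists y', R x' y' /\ le y y'.
Hypothesis back_down : forall x' y' y, R x' y' -> le y y' -> exists x, le x x' /\ R x y.
Hypothesis back_up : forall x y y', R x y -> le y y' -> exists x', le x x' /\ R x' y'.
Hypothesis image_convex : forall x y1 y2 y3, R x y1 -> R x y3 -> le y1 y2 -> le y2 y3 -> R x y2.

Definition linked (c c' : Qc -> W) : Prop :=
  forall w, exists p q, R p q /\ same_label p (c w) /\ same_label q (c' w).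

Section Successor.
Variables (c : Qc -> W) (r : Qc) (x1 : W) (ys : list W).
Hypothesis c_column : column c.
Hypothesis R_r : R (c r) x1.
Hypothesis ys_chain : class_chain x1 ys.

Definition reaches (j : nat) (w : Qc) : Prop :=
  exists p q, comparable p (c r) /\ same_label p (c w) /\ R p q /\
              comparable q x1 /\ same_label q (rep x1 ys j).

Lemma reaches_saturated j w w' : reaches j w -> same_label (c w) (c w') -> reaches j w'.
Proof.
  intros (p & q & Hp & Hpw & Hpq & Hq & Hqj) Hww'.
  exists p, q. splits; auto. apply same_label_trans with (c w); assumption.
Qed.

(** Strictly between two points of different labels, [c w2] lies strictly between
    worlds of the outer classes; confluence and convexity of [R] then move the step. *)
Lemma reaches_convex j w1 w2 w3 : reaches j w1 -> reaches j w3 -> w1 <= w2 -> w2 <= w3 -> reaches j w2.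
Proof.
  intros Hw1 Hw3 H12 H23. destruct c_column as (Hcomp & Hmono & _).
  destruct (classic (same_label (c w1) (c w2))) as [E1|E1]; [exact (reaches_saturated j w1 w2 Hw1 E1)|].
  destruct (classic (same_label (c w3) (c w2))) as [E3|E3]; [exact (reaches_saturated j w3 w2 Hw3 E3)|].
  destruct Hw1 as (p1 & q1 & Hp1 & Hp1w & R1 & Hq1 & Hq1j), Hw3 as (p3 & q3 & Hp3 & Hp3w & R3 & Hq3 & Hq3j).
  assert (Hp1_le : le p1 (c w2)).
  { apply comparable_label_le.
    - apply comparable_trans with (c r); [exact Hp1|apply Hcomp].
    - apply label_sub_trans with (c w1); [apply Hmono, H12|apply same_label_sub, same_label_sym, Hp1w].
    - intros Hs. apply E1. apply same_label_trans with p1; [apply same_label_sym, Hp1w|exact Hs]. }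
  assert (Hp3_ge : le (c w2) p3).
  { apply comparable_label_le.
    - apply comparable_trans with (c r); [apply Hcomp|apply comparable_sym, Hp3].
    - apply label_sub_trans with (c w3); [apply same_label_sub, Hp3w|apply Hmono, H23].
    - intros Hs. apply E3. apply same_label_trans with p3; [apply same_label_sym, Hp3w|apply same_label_sym, Hs]. }
  destruct (forth_down _ _ _ Hp3_ge R3) as (q & Rq & Hqq3).
  destruct (forth_up _ _ _ Hp1_le R1) as (q' & Rq' & Hq1q').
  assert (Hqq1 : comparable q q1).
  { apply comparable_trans with q3; [left; exact Hqq3|].
    apply comparable_trans with x1; [exact Hq3|apply comparable_sym, Hq1]. }
  destruct Hqq1 as [Hqq1|Hq1q].
  - exists (c w2), q1. splits; auto using same_label_refl.
    exact (image_convex (c w2) q q1 q' Rq Rq' Hqq1 Hq1q').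
  - exists (c w2), q. splits; auto using same_label_refl.
    + apply (comparable_trans q q3 x1); [left; exact Hqq3|exact Hq3].
    + apply same_label_trans with q1; [|exact Hq1j]. apply label_sub_antisym.
      * apply le_label_sub, Hq1q.
      * apply label_sub_trans with q3; [|apply le_label_sub, Hqq3].
        apply same_label_sub. apply same_label_trans with (rep x1 ys j); [exact Hq1j|apply same_label_sym, Hq3j].
Qed.

Lemma reaches_lower j k b : (j < k <= length ys - 1)%nat -> reaches k b -> exists a, reaches j a /\ a <= b.
Proof.
  intros Hjk (p & q & Hp & Hpb & Rpq & Hq & Hqk). destruct c_column as (_ & Hmono & Hfull & _).
  destruct (rep_strictly_below x1 ys ys_chain j k ltac:(lia)) as [Hjk_le Hjk_ne].
  assert (Hjq : le (rep x1 ys j) q).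
  { apply comparable_label_le.
    - apply comparable_trans with x1; [apply rep_comparable; auto; lia|apply comparable_sym, Hq].
    - apply label_sub_trans with (rep x1 ys k); [apply same_label_sub, Hqk|apply le_label_sub, Hjk_le].
    - intros Hs. apply Hjk_ne. apply same_label_trans with q; [exact Hs|exact Hqk]. }
  destruct (back_down _ _ _ Rpq Hjq) as (p' & Hp'p & Rp').
  assert (Hp' : comparable p' (c r)) by (apply comparable_trans with p; [left; exact Hp'p|exact Hp]).
  destruct (Hfull r p' Hp') as (v & Hv).
  assert (Hjv : reaches j v).
  { exists p', (rep x1 ys j). splits; auto using same_label_refl.
    - apply same_label_sym, Hv.
    - apply rep_comparable; auto. lia. }
  destruct (Qclt_le_dec b v) as [Hbv|Hvb]; [|exists v; auto].
  exists b. split; [|apply Qcle_refl]. apply (reaches_saturated j v b Hjv). apply label_sub_antisym.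
  - apply Hmono, Qclt_le_weak, Hbv.
  - apply label_sub_trans with p; [apply same_label_sub, same_label_sym, Hpb|].
    apply label_sub_trans with p'; [apply le_label_sub, Hp'p|apply same_label_sub, same_label_sym, Hv].
Qed.

Lemma reaches_upper j k a : (j < k <= length ys - 1)%nat -> reaches j a -> exists b, reaches k b /\ a <= b.
Proof.
  intros Hjk (p & q & Hp & Hpa & Rpq & Hq & Hqj). destruct c_column as (_ & Hmono & Hfull & _).
  destruct (rep_strictly_below x1 ys ys_chain j k ltac:(lia)) as [Hjk_le Hjk_ne].
  assert (Hqk : le q (rep x1 ys k)).
  { apply comparable_label_le.
    - apply comparable_trans with x1; [exact Hq|apply comparable_sym, rep_comparable; auto; lia].
    - apply label_sub_trans with (rep x1 ys j); [apply le_label_sub, Hjk_le|apply same_label_sub, same_label_sym, Hqj].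
    - intros Hs. apply Hjk_ne. apply same_label_trans with q; [apply same_label_sym, Hqj|exact Hs]. }
  destruct (back_up _ _ _ Rpq Hqk) as (p' & Hpp' & Rp').
  assert (Hp' : comparable p' (c r)) by (apply comparable_trans with p; [right; exact Hpp'|exact Hp]).
  destruct (Hfull r p' Hp') as (v & Hv).
  assert (Hkv : reaches k v).
  { exists p', (rep x1 ys k). splits; auto using same_label_refl.
    - apply same_label_sym, Hv.
    - apply rep_comparable; auto. lia. }
  destruct (Qclt_le_dec v a) as [Hva|Hav]; [|exists v; auto].
  exists a. split; [|apply Qcle_refl]. apply (reaches_saturated k v a Hkv). apply label_sub_antisym.
  - apply label_sub_trans with p'; [apply same_label_sub, Hv|].
    apply label_sub_trans with p; [apply le_label_sub, Hpp'|apply same_label_sub, Hpa].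
  - apply Hmono, Qclt_le_weak, Hva.
Qed.

(** By forward confluence every point of the column reaches some class. *)
Lemma reaches_cover w : exists j, (j <= length ys - 1)%nat /\ reaches j w.
Proof.
  destruct c_column as (Hcomp & _).
  assert (Hy : exists y, R (c w) y /\ comparable y x1).
  { destruct (Hcomp w r) as [Hwr|Hrw].
    - destruct (forth_down _ _ _ Hwr R_r) as (y & ? & ?). exists y. split; [|left]; assumption.
    - destruct (forth_up _ _ _ Hrw R_r) as (y & ? & ?). exists y. split; [|right]; assumption. }
  destruct Hy as (y & Ry & Hy). destruct (rep_cover x1 ys ys_chain y Hy) as (j & Hj & Hyj).
  exists j. split; [lia|]. exists (c w), y. splits; auto using same_label_refl.
Qed.

(** Interval-partition the rationals by reachable class and follow the class chain. *)
Theorem successor_column : exists c', column c' /\ c' r = x1 /\ linked c c'.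
Proof.
  destruct (rep_cover x1 ys ys_chain x1 (comparable_refl x1)) as (jr & Hjr & Hx1).
  assert (Hr : reaches jr r).
  { exists (c r), x1. splits; auto using comparable_refl, same_label_refl. }
  destruct (partition_exists (length ys - 1) reaches (fun w w' => same_label (c w) (c w')) r jr)
    as (tau & Htau & Hreach & Htau_r).
  - intros x y. apply same_label_sym.
  - intros x y z. apply column_classes_convex, c_column.
  - intros w. destruct c_column as (_ & _ & _ & Hopen). destruct (Hopen w) as (u & v & ? & ? & ? & ?).
    exists u, v. auto.
  - exact reaches_saturated.
  - exact reaches_convex.
  - exact reaches_lower.
  - exact reaches_upper.
  - exact reaches_cover.
  - lia.
  - exact Hr.
  - destruct (chain_column_spec x1 ys tau r x1 ys_chain Htau (comparable_refl x1))
      as (Hcol & Hval & Hrep); [rewrite Htau_r; exact Hx1|].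
    exists (chain_column ys x1 tau r x1). split; [exact Hcol|split; [exact Hval|]].
    intros w. destruct (Hreach w) as (p & q & _ & Hpw & Rpq & _ & Hq).
    exists p, q. splits; auto. apply same_label_trans with (rep x1 ys (tau w)); [exact Hq|].
    apply same_label_sym, Hrep.
Qed.
End Successor.

Lemma successor_column_exists c r x1 : column c -> R (c r) x1 ->
  exists c', column c' /\ c' r = x1 /\ linked c c'.
Proof.
  intros Hc HR. destruct (class_chain_exists x1) as (ys & Hys). exact (successor_column c r x1 ys Hc HR Hys).
Qed.

Lemma columns_along c r ps : column c -> chain (fun _ => True) R (c r) ps ->
  exists cs, chain column linked c cs /\ map (fun c' => c' r) cs = ps.
Proof.
  revert c. induction ps as [|y ps IH]; intros c Hc Hpath; [exists []; simpl; auto|].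
  destruct Hpath as (Ry & _ & Hpath).
  destruct (successor_column_exists c r y Hc Ry) as (c1 & Hc1 & Hc1r & Hlink).
  rewrite <- Hc1r in Hpath. destruct (IH c1 Hc1 Hpath) as (cs & Hcs & Hmap).
  exists (c1 :: cs). simpl. rewrite Hc1r, Hmap. auto.
Qed.

Lemma column_block (pend dn : W -> Prop) c r :
  (forall x, exists y, R x y) -> column c ->
  (pend (c r) -> exists ps, chain (fun _ => True) R (c r) ps /\ Exists dn (c r :: ps)) ->
  exists cs, cs <> [] /\ chain column linked c cs /\ (pend (c r) -> Exists (fun c' => dn (c' r)) (c :: cs)).
Proof.
  intros Hserial Hc Hreal.
  assert (Hps : exists ps, ps <> [] /\ chain (fun _ => True) R (c r) ps /\ (pend (c r) -> Exists dn (c r :: ps))).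
  { destruct (Hserial (c r)) as (y & Ry).
    destruct (classic (pend (c r))) as [Hp|Hp];
      [|exists [y]; split; [congruence|split; [simpl; auto|tauto]]].
    destruct (Hreal Hp) as ([|y' ps] & Hpath & Hdn).
    - exists [y]. split; [congruence|split; [simpl; auto|intros _]].
      inversion Hdn as [? ? Hd|? ? Htl]; [now constructor|inversion Htl].
    - exists (y' :: ps). splits; [congruence|exact Hpath|auto]. }
  destruct Hps as (ps & Hne & Hpath & Hdn).
  destruct (columns_along c r ps Hc Hpath) as (cs & Hcs & Hmap).
  exists cs. splits; [intros ->; simpl in Hmap; congruence|exact Hcs|].
  intros Hp. apply (Exists_map (fun c' => c' r)). simpl. rewrite Hmap. auto.
Qed.

End Step.
End Columns.

(** * Linear-time operators along a sequence of types *)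

(** [P n] holds iff [Q n] holds and [P] holds at [n+1]: the fixed-point unfolding of
    "always [Q]" ([G], and [H] read backwards). *)
Lemma always_holds (P Q : nat -> Prop) :
  (forall n, P n <-> Q n /\ P (S n)) -> P 0%nat -> forall n, Q n.
Proof.
  intros Hunfold HP0. assert (HP : forall n, P n).
  { induction n as [|n IH]; [exact HP0|apply (Hunfold n), IH]. }
  intros n. apply (Hunfold n), HP.
Qed.

Lemma always_fails (P Q : nat -> Prop) :
  (forall n, P n <-> Q n /\ P (S n)) -> (exists k, ~ P k -> exists n, ~ Q (k + n)%nat) ->
  ~ P 0%nat -> exists n, ~ Q n.
Proof.
  intros Hunfold (k & Hk) HnP0. apply NNPP. intros Hno.
  assert (HQ : forall n, Q n) by (intros n; apply NNPP; intros HnQ; apply Hno; exists n; exact HnQ).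
  assert (HPk : P k) by (apply NNPP; intros HnPk; destruct (Hk HnPk) as (n & Hn); exact (Hn (HQ _))).
  apply HnP0. assert (Hback : forall i, (i <= k)%nat -> P (k - i)%nat).
  { induction i as [|i IH]; intros Hi; [rewrite Nat.sub_0_r; exact HPk|].
    apply Hunfold. split; [apply HQ|]. replace (S (k - S i)) with (k - i)%nat by lia. apply IH. lia. }
  replace 0%nat with (k - k)%nat by lia. apply Hback. lia.
Qed.

(** [U n] holds iff [B n], or [A n] and [U] at [n+1]: the unfolding of "[A] until [B]"
    ([U], and [S] read backwards). *)
Lemma until_holds (U A B : nat -> Prop) :
  (forall n, U n <-> B n \/ (A n /\ U (S n))) ->
  forall n, B n -> (forall i, (i < n)%nat -> A i) -> U 0%nat.
Proof.
  intros Hunfold n. enough (H : forall m, B (m + n)%nat -> (forall i, (i < n)%nat -> A (m + i)%nat) -> U m)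
    by (intros Hb Ha; apply (H 0%nat); auto).
  induction n as [|n IH]; intros m Hb Ha.
  - apply Hunfold. left. rewrite Nat.add_0_r in Hb. exact Hb.
  - apply Hunfold. right. split; [rewrite <- (Nat.add_0_r m); apply Ha; lia|].
    apply IH; [replace (S m + n)%nat with (m + S n)%nat by lia; exact Hb|].
    intros i Hi. replace (S m + i)%nat with (m + S i)%nat by lia. apply Ha. lia.
Qed.

Lemma until_fulfilled (U A B : nat -> Prop) :
  (forall n, U n <-> B n \/ (A n /\ U (S n))) -> (exists k, U k -> exists n, B (k + n)%nat) ->
  U 0%nat -> exists n, B n /\ forall i, (i < n)%nat -> A i.
Proof.
  intros Hunfold (k & Hk) HU0. apply NNPP. intros Hno.
  assert (Hinv : forall n, U n /\ forall i, (i < n)%nat -> A i).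
  { induction n as [|n (HUn & HAn)]; [split; [exact HU0|intros; lia]|].
    apply Hunfold in HUn as [HB|[HA HU]]; [exfalso; apply Hno; exists n; auto|].
    split; [exact HU|]. intros i Hi. destruct (Nat.eq_dec i n) as [->|]; [exact HA|apply HAn; lia]. }
  destruct (Hk (proj1 (Hinv k))) as (n & Hb). apply Hno. exists (k + n)%nat. split; [exact Hb|apply Hinv].
Qed.

Definition converse {W : Type} (R : W -> W -> Prop) : W -> W -> Prop := fun x y => R y x.

Lemma Rpow_snoc {W : Type} (R : W -> W -> Prop) n x y z :
  Rpow W R n x y -> R y z -> Rpow W R (S n) x z.
Proof.
  revert x. induction n as [|n IH]; intros x Hxy Hyz; simpl in *.
  - subst. exists z. auto.
  - destruct Hxy as (u & Hxu & Huy). exists u. split; [exact Hxu|]. apply (IH u Huy Hyz).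
Qed.

Lemma Rpow_converse {W : Type} (R : W -> W -> Prop) n x y :
  Rpow W R n x y -> Rpow W (converse R) n y x.
Proof.
  revert x. induction n as [|n IH]; intros x Hxy; simpl in *; [congruence|].
  destruct Hxy as (u & Hxu & Huy). apply Rpow_snoc with u; [apply IH, Huy|exact Hxu].
Qed.

Lemma Rpow_chain {W : Type} (R : W -> W -> Prop) n x v :
  Rpow W R n x v -> exists ps, chain (fun _ => True) R x ps /\ In v (x :: ps).
Proof.
  revert x. induction n as [|n IH]; intros x Hxv; simpl in Hxv.
  - exists []. subst. simpl. auto.
  - destruct Hxv as (z & Hxz & Hzv). destruct (IH z Hzv) as (ps & Hps & Hin).
    exists (z :: ps). simpl. auto.
Qed.

Lemma fully_confluent_converse {W : Type} (le R : W -> W -> Prop) :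
  fully_confluent W le R -> fully_confluent W le (converse R).
Proof.
  unfold fully_confluent, converse. intros (Hfd & Hfu & Hbd & Hbu). splits.
  - intros x x' y' Hxx' Ry'x'. destruct (Hbd y' x' x Ry'x' Hxx') as (y & ? & ?). eauto.
  - intros x x' y Hxx' Ryx. destruct (Hbu y x x' Ryx Hxx') as (y' & ? & ?). eauto.
  - intros x' y' y Ry'x' Hyy'. destruct (Hfd y y' x' Hyy' Ry'x') as (x & ? & ?). eauto.
  - intros x y y' Ryx Hyy'. destruct (Hfu y y' x Hyy' Ryx) as (x' & ? & ?). eauto.
Qed.

Lemma convex_rel_converse {W : Type} (le R : W -> W -> Prop) :
  convex_rel W le R -> convex_rel W le (converse R).
Proof. intros [Himg Hpre]. split; [exact Hpre|exact Himg]. Qed.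

Lemma bi_serial_converse {W : Type} (R : W -> W -> Prop) : bi_serial W R -> bi_serial W (converse R).
Proof. intros H w. destruct (H w) as [Hf Hb]. split; assumption. Qed.

Lemma sensible_pair_ext Sg (A B A' B' : fset) :
  sensible_pair Sg A B -> (forall f, A f <-> A' f) -> (forall f, B f <-> B' f) -> sensible_pair Sg A' B'.
Proof.
  intros (H1 & H2 & H3 & H4 & H5 & H6) HA HB. unfold sensible_pair.
  splits; intros; rewrite <- ?HA, <- ?HB; auto.
Qed.

Definition enum_Qc (n : nat) : Qc :=
  let '(a, b) := Cantor.of_nat n in
  let '(p, q) := Cantor.of_nat a in
  Q2Qc (Qmake (Z.of_nat p - Z.of_nat q) (Pos.of_succ_nat b)).

Lemma enum_Qc_surj (x : Qc) : exists n, enum_Qc n = x.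
Proof.
  set (num := Qnum (this x)). set (den := Qden (this x)).
  exists (Cantor.to_nat (Cantor.to_nat (Z.to_nat num, Z.to_nat (- num)), pred (Pos.to_nat den))).
  unfold enum_Qc. rewrite !Cantor.cancel_of_to.
  replace (Z.of_nat (Z.to_nat num) - Z.of_nat (Z.to_nat (- num)))%Z with num by lia.
  replace (Pos.of_succ_nat (pred (Pos.to_nat den))) with den.
  - apply Qc_is_canon. rewrite Q2Qc_this. unfold num, den. destruct (this x). reflexivity.
  - apply Pos2Nat.inj. rewrite SuccNat2Pos.id_succ. pose proof (Pos2Nat.is_pos den). lia.
Qed.

Definition enum_task (n : nat) : Qc * nat :=
  let '(a, j) := Cantor.of_nat n in (enum_Qc a, j).

Lemma enum_task_surj (tk : Qc * nat) : exists n, enum_task n = tk.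
Proof.
  destruct tk as [x j]. destruct (enum_Qc_surj x) as (a & Ha).
  exists (Cantor.to_nat (a, j)). unfold enum_task. rewrite Cantor.cancel_of_to, Ha. reflexivity.
Qed.

Definition ahead (z : Z) (n : nat) : Z := (z + Z.of_nat n)%Z.
Definition behind (z : Z) (n : nat) : Z := (z - Z.of_nat n)%Z.

Lemma Spow_ahead n z : Spow Z Z.succ n z = ahead z n.
Proof.
  induction n as [|n IH]; [unfold ahead; simpl; lia|].
  change (Spow Z Z.succ (S n) z) with (Z.succ (Spow Z Z.succ n z)). rewrite IH. unfold ahead. lia.
Qed.

Lemma Sinvpow_behind n z : Sinvpow Z Z.pred n z = behind z n.
Proof.
  induction n as [|n IH]; [unfold behind; simpl; lia|].
  change (Sinvpow Z Z.pred (S n) z) with (Z.pred (Sinvpow Z Z.pred n z)). rewrite IH. unfold behind. lia.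
Qed.

(** * The bi-relational model of a quasimodel *)

Section FromQuasimodel.
Variables (Sg : fset) (W : Type) (le : W -> W -> Prop) (l : W -> fset) (R : W -> W -> Prop).
Variable sgl : list formula.
Hypothesis Sg_list : forall f, Sg f <-> In f sgl.
Hypothesis Sg_closed : subformula_closed Sg.
Hypothesis Q : quasimodel Sg W le l R.

Ltac quasimodel_facts :=
  destruct Q as [[[[[Hrefl [Htrans Hanti]] Hlocal] [Htype [Hmono [Himp Hcoimp]]]]
                   [Hserial [Hconf [Hconv Hsens]]]] Homega].

Lemma q_le_refl x : le x x.
Proof. quasimodel_facts. auto. Qed.
Lemma q_le_trans x y z : le x y -> le y z -> le x z.
Proof. quasimodel_facts. eauto. Qed.
(** Comparable worlds lie in the same linear block, so comparability is transitive. *)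
Lemma q_comparable_trans x y z : (le x y \/ le y x) -> (le y z \/ le z y) -> le x z \/ le z x.
Proof.
  quasimodel_facts. destruct Hlocal as (I & blk & Hsame & Hlin). intros Hxy Hyz. apply Hlin.
  transitivity (blk y); [destruct Hxy|destruct Hyz]; [|symmetry| |symmetry]; auto.
Qed.
Lemma q_label_mono w v f : le w v -> l v f -> l w f.
Proof. quasimodel_facts. eauto. Qed.
Lemma q_type w : is_type Sg (l w).
Proof. quasimodel_facts. auto. Qed.
Lemma q_label_finite w f : l w f -> In f sgl.
Proof. intros Hf. apply Sg_list, (q_type w), Hf. Qed.
Lemma q_imp_witness w a b : Sg (Imp a b) -> ~ l w (Imp a b) -> exists v, le v w /\ l v a /\ ~ l v b.
Proof. quasimodel_facts. auto. Qed.
Lemma q_coimp_witness w a b : l w (Coimp a b) -> exists v, le w v /\ l v a /\ ~ l v b.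
Proof. quasimodel_facts. auto. Qed.
Lemma q_confluent : fully_confluent W le R.
Proof. quasimodel_facts. auto. Qed.
Lemma q_convex : convex_rel W le R.
Proof. quasimodel_facts. auto. Qed.
Lemma q_bi_serial : bi_serial W R.
Proof. quasimodel_facts. auto. Qed.
Lemma q_sensible w v : R w v -> sensible_pair Sg (l w) (l v).
Proof. quasimodel_facts. auto. Qed.
Lemma q_omega : omega_sensible Sg W l R.
Proof. quasimodel_facts. auto. Qed.

Notation column := (column W le l).

Lemma column_imp c a b w : column c -> Sg (Imp a b) ->
  (forall v, v <= w -> l (c v) a -> l (c v) b) <-> l (c w) (Imp a b).
Proof.
  intros (_ & Hmono & Hfull & _) HS. split.
  - intros Hsat. apply NNPP. intros Hn.
    destruct (q_imp_witness (c w) a b HS Hn) as (v' & Hv'w & Hv'a & Hv'b).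
    destruct (Hfull w v' (or_introl Hv'w)) as (v & Hv).
    destruct (Qclt_le_dec w v) as [Hwv|Hvw].
    + apply Hv'b, (q_label_mono v' (c w) b Hv'w). apply Hsat; [apply Qcle_refl|].
      apply (Hmono w v (Qclt_le_weak _ _ Hwv)), Hv, Hv'a.
    + apply Hv'b, Hv, Hsat; [exact Hvw|apply Hv, Hv'a].
  - intros Himp v Hvw Ha. destruct (q_type (c v)) as (_ & _ & _ & Htype_imp & _).
    destruct (proj1 (Htype_imp a b HS) (Hmono v w Hvw _ Himp)); tauto.
Qed.

Lemma column_coimp c a b w : column c -> Sg (Coimp a b) ->
  (exists v, w <= v /\ l (c v) a /\ ~ l (c v) b) <-> l (c w) (Coimp a b).
Proof.
  intros (_ & Hmono & Hfull & _) HS. split.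
  - intros (v & Hwv & Ha & Hb). destruct (q_type (c v)) as (_ & _ & _ & _ & Htype_coimp).
    apply (Hmono w v Hwv), (proj2 (Htype_coimp a b HS) Ha Hb).
  - intros Hc. destruct (q_coimp_witness (c w) a b Hc) as (v' & Hwv' & Hv'a & Hv'b).
    destruct (Hfull w v' (or_intror Hwv')) as (v & Hv).
    destruct (Qclt_le_dec v w) as [Hvw|Hwv].
    + exists w. splits; [apply Qcle_refl|apply (q_label_mono (c w) v' a Hwv' Hv'a)|].
      intros Hb. apply Hv'b, Hv, (Hmono v w (Qclt_le_weak _ _ Hvw)), Hb.
    + exists v. splits; [exact Hwv|apply Hv, Hv'a|]. intros Hb. apply Hv'b, Hv, Hb.
Qed.

Definition future_pending (f : formula) (x : W) : Prop :=
  match f with Glob a => ~ l x (Glob a) | Until a b => l x (Until a b) | _ => False end.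
Definition future_done (f : formula) (x : W) : Prop :=
  match f with Glob a => ~ l x a | Until a b => l x b | _ => True end.
Definition past_pending (f : formula) (x : W) : Prop :=
  match f with Hist a => ~ l x (Hist a) | Since a b => l x (Since a b) | _ => False end.
Definition past_done (f : formula) (x : W) : Prop :=
  match f with Hist a => ~ l x a | Since a b => l x b | _ => True end.

Lemma future_realizable f x : Sg f -> future_pending f x ->
  exists ps, chain (fun _ => True) R x ps /\ Exists (future_done f) (x :: ps).
Proof.
  intros HS Hp. destruct q_omega as (Hglob & _ & Huntil & _).
  assert (Hv : exists n v, Rpow W R n x v /\ future_done f v).
  { destruct f; try contradiction; simpl in *; eauto. }
  destruct Hv as (n & v & Hn & Hv). destruct (Rpow_chain R n x v Hn) as (ps & Hps & Hin).
  exists ps. split; [exact Hps|]. apply Exists_exists. eauto.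
Qed.

Lemma past_realizable f x : Sg f -> past_pending f x ->
  exists ps, chain (fun _ => True) (converse R) x ps /\ Exists (past_done f) (x :: ps).
Proof.
  intros HS Hp. destruct q_omega as (_ & Hhist & _ & Hsince).
  assert (Hv : exists n v, Rpow W R n v x /\ past_done f v).
  { destruct f; try contradiction; simpl in *; eauto. }
  destruct Hv as (n & v & Hn & Hv).
  destruct (Rpow_chain (converse R) n x v (Rpow_converse R n v x Hn)) as (ps & Hps & Hin).
  exists ps. split; [exact Hps|]. apply Exists_exists. eauto.
Qed.

Lemma column_sequence (Rt : W -> W -> Prop) (pending done : formula -> W -> Prop) c0 :
  fully_confluent W le Rt -> convex_rel W le Rt -> bi_serial W Rt ->
  (forall f x, Sg f -> pending f x -> exists ps, chain (fun _ => True) Rt x ps /\ Exists (done f) (x :: ps)) ->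
  column c0 ->
  exists cs : nat -> Qc -> W, cs O = c0 /\ (forall t, column (cs t)) /\
    (forall t, linked W l Rt (cs t) (cs (S t))) /\
    forall w f t, Sg f -> exists s, (t <= s)%nat /\ (pending f (cs s w) -> exists n, done f (cs (s + n)%nat w)).
Proof.
  intros (Hfd & Hfu & Hbd & Hbu) (Himg & _) Hser Hreal Hc0.
  set (task_formula (tk : Qc * nat) := nth (snd tk) sgl (Var 0)).
  destruct (dovetail (Qc -> W) (Qc * nat) column (linked W l Rt)
              (fun tk c => Sg (task_formula tk) /\ pending (task_formula tk) (c (fst tk)))
              (fun tk c => done (task_formula tk) (c (fst tk))) enum_task enum_task_surj)
    with (x0 := c0) as (cs & H0 & Hcol & Hlink & Hfair); [|exact Hc0|].
  - intros c [r j] Hc.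
    apply (column_block W le l sgl q_le_refl q_le_trans q_comparable_trans q_label_mono q_label_finite
             Rt Hfd Hfu Hbd Hbu Himg (fun x => Sg (task_formula (r, j)) /\ pending (task_formula (r, j)) x));
      [intros x; apply Hser|exact Hc|].
    intros [HS Hp]. apply Hreal; assumption.
  - exists cs. splits; [exact H0|exact Hcol|exact Hlink|].
    intros w f t HS. destruct (In_nth sgl f (Var 0) (proj1 (Sg_list f) HS)) as (j & _ & Hj).
    destruct (Hfair (w, j) t) as (s & Hts & Hs). exists s. split; [exact Hts|].
    unfold task_formula in Hs. simpl in Hs. rewrite Hj in Hs. auto.
Qed.

Section Truth.
Variable col : Z -> Qc -> W.
Hypothesis col_column : forall z, column (col z).
Hypothesis col_sensible : forall z w, sensible_pair Sg (l (col z w)) (l (col (z + 1) w)).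
Hypothesis col_future : forall w f z, Sg f ->
  exists s, (z <= s)%Z /\ (future_pending f (col s w) -> exists n, future_done f (col (ahead s n) w)).
Hypothesis col_past : forall w f z, Sg f ->
  exists s, (s <= z)%Z /\ (past_pending f (col s w) -> exists n, past_done f (col (behind s n) w)).

Definition val (p : nat) (w : Qc) (z : Z) : Prop := l (col z w) (Var p).

Local Notation holds f w z := (sat Qc Z Qcle Z.succ Z.pred val f w z).

Lemma ahead_0 z : ahead z 0 = z.
Proof. unfold ahead. lia. Qed.
Lemma behind_0 z : behind z 0 = z.
Proof. unfold behind. lia. Qed.

Lemma sensible_ahead z n w : sensible_pair Sg (l (col (ahead z n) w)) (l (col (ahead z (S n)) w)).
Proof. replace (ahead z (S n)) with (ahead z n + 1)%Z by (unfold ahead; lia). apply col_sensible. Qed.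

Lemma sensible_behind z n w : sensible_pair Sg (l (col (behind z (S n)) w)) (l (col (behind z n) w)).
Proof. replace (behind z n) with (behind z (S n) + 1)%Z by (unfold behind; lia). apply col_sensible. Qed.

Lemma future_ahead w f z : Sg f ->
  exists k, future_pending f (col (ahead z k) w) -> exists n, future_done f (col (ahead z (k + n)) w).
Proof.
  intros HS. destruct (col_future w f z HS) as (s & Hzs & Hs). exists (Z.to_nat (s - z)).
  replace (ahead z (Z.to_nat (s - z))) with s by (unfold ahead; lia). intros Hp.
  destruct (Hs Hp) as (n & Hn). exists n. replace (ahead z (Z.to_nat (s - z) + n)) with (ahead s n) by (unfold ahead; lia).
  exact Hn.
Qed.

Lemma past_behind w f z : Sg f ->
  exists k, past_pending f (col (behind z k) w) -> exists n, past_done f (col (behind z (k + n)) w).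
Proof.
  intros HS. destruct (col_past w f z HS) as (s & Hsz & Hs). exists (Z.to_nat (z - s)).
  replace (behind z (Z.to_nat (z - s))) with s by (unfold behind; lia). intros Hp.
  destruct (Hs Hp) as (n & Hn). exists n. replace (behind z (Z.to_nat (z - s) + n)) with (behind s n) by (unfold behind; lia).
  exact Hn.
Qed.

Definition truthful (a : formula) : Prop := forall w z, holds a w z <-> l (col z w) a.

Lemma truth_imp a b w z : Sg (Imp a b) -> truthful a -> truthful b ->
  holds (Imp a b) w z <-> l (col z w) (Imp a b).
Proof.
  intros HS Ha Hb. unfold truthful in *. rewrite <- (column_imp (col z) a b w (col_column z) HS). simpl.
  split; intros H v Hv; specialize (H v Hv); rewrite Ha, Hb in *; exact H.
Qed.

Lemma truth_coimp a b w z : Sg (Coimp a b) -> truthful a -> truthful b ->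
  holds (Coimp a b) w z <-> l (col z w) (Coimp a b).
Proof.
  intros HS Ha Hb. unfold truthful in *. rewrite <- (column_coimp (col z) a b w (col_column z) HS). simpl.
  split; intros (v & Hv & Hav & Hbv); exists v; rewrite Ha, Hb in *; auto.
Qed.

Lemma truth_glob a w z : Sg (Glob a) -> truthful a -> holds (Glob a) w z <-> l (col z w) (Glob a).
Proof.
  intros HS Ha. unfold truthful in *. simpl.
  set (P := fun n => l (col (ahead z n) w) (Glob a)). set (Qa := fun n => l (col (ahead z n) w) a).
  assert (Hunfold : forall n, P n <-> Qa n /\ P (S n)) by (intros n; apply (sensible_ahead z n w), HS).
  assert (HP0 : P 0%nat <-> l (col z w) (Glob a)) by (unfold P; rewrite ahead_0; tauto).
  split.
  - intros Hall. apply HP0, NNPP. intros HnP.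
    destruct (always_fails P Qa Hunfold (future_ahead w (Glob a) z HS) HnP) as (n & Hn).
    apply Hn. unfold Qa. rewrite <- Ha, <- Spow_ahead. apply Hall.
  - intros Hg n. rewrite Ha, Spow_ahead. apply (always_holds P Qa Hunfold), HP0, Hg.
Qed.

Lemma truth_hist a w z : Sg (Hist a) -> truthful a -> holds (Hist a) w z <-> l (col z w) (Hist a).
Proof.
  intros HS Ha. unfold truthful in *. simpl.
  set (P := fun n => l (col (behind z n) w) (Hist a)). set (Qa := fun n => l (col (behind z n) w) a).
  assert (Hunfold : forall n, P n <-> Qa n /\ P (S n)) by (intros n; apply (sensible_behind z n w), HS).
  assert (HP0 : P 0%nat <-> l (col z w) (Hist a)) by (unfold P; rewrite behind_0; tauto).
  split.
  - intros Hall. apply HP0, NNPP. intros HnP.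
    destruct (always_fails P Qa Hunfold (past_behind w (Hist a) z HS) HnP) as (n & Hn).
    apply Hn. unfold Qa. rewrite <- Ha, <- Sinvpow_behind. apply Hall.
  - intros Hh n. rewrite Ha, Sinvpow_behind. apply (always_holds P Qa Hunfold), HP0, Hh.
Qed.

Lemma truth_until a b w z : Sg (Until a b) -> truthful a -> truthful b ->
  holds (Until a b) w z <-> l (col z w) (Until a b).
Proof.
  intros HS Ha Hb. unfold truthful in *. simpl.
  set (U := fun n => l (col (ahead z n) w) (Until a b)).
  set (A := fun n => l (col (ahead z n) w) a). set (B := fun n => l (col (ahead z n) w) b).
  assert (Hunfold : forall n, U n <-> B n \/ (A n /\ U (S n))) by (intros n; apply (sensible_ahead z n w), HS).
  assert (HU0 : U 0%nat <-> l (col z w) (Until a b)) by (unfold U; rewrite ahead_0; tauto).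
  split.
  - intros (n & Hbn & Han). apply HU0, (until_holds U A B Hunfold n).
    + unfold B. rewrite <- Hb, <- Spow_ahead. exact Hbn.
    + intros i Hi. unfold A. rewrite <- Ha, <- Spow_ahead. apply Han, Hi.
  - intros Hu. destruct (until_fulfilled U A B Hunfold (future_ahead w (Until a b) z HS) (proj2 HU0 Hu))
      as (n & Hbn & Han).
    exists n. split; [rewrite Hb, Spow_ahead; exact Hbn|].
    intros i Hi. rewrite Ha, Spow_ahead. apply Han, Hi.
Qed.

Lemma truth_since a b w z : Sg (Since a b) -> truthful a -> truthful b ->
  holds (Since a b) w z <-> l (col z w) (Since a b).
Proof.
  intros HS Ha Hb. unfold truthful in *. simpl.
  set (U := fun n => l (col (behind z n) w) (Since a b)).
  set (A := fun n => l (col (behind z n) w) a). set (B := fun n => l (col (behind z n) w) b).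
  assert (Hunfold : forall n, U n <-> B n \/ (A n /\ U (S n))) by (intros n; apply (sensible_behind z n w), HS).
  assert (HU0 : U 0%nat <-> l (col z w) (Since a b)) by (unfold U; rewrite behind_0; tauto).
  split.
  - intros (n & Hbn & Han). apply HU0, (until_holds U A B Hunfold n).
    + unfold B. rewrite <- Hb, <- Sinvpow_behind. exact Hbn.
    + intros i Hi. unfold A. rewrite <- Ha, <- Sinvpow_behind. apply Han, Hi.
  - intros Hs. destruct (until_fulfilled U A B Hunfold (past_behind w (Since a b) z HS) (proj2 HU0 Hs))
      as (n & Hbn & Han).
    exists n. split; [rewrite Hb, Sinvpow_behind; exact Hbn|].
    intros i Hi. rewrite Ha, Sinvpow_behind. apply Han, Hi.
Qed.

Theorem truth f : Sg f -> truthful f.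
Proof.
  induction f; intros HS w z;
    assert (Hsub : forall g, In g (children _) -> Sg g) by (intros g; apply Sg_closed, HS);
    simpl in Hsub.
  - reflexivity.
  - simpl. rewrite (IHf1 ltac:(auto) w z), (IHf2 ltac:(auto) w z). symmetry. apply (q_type (col z w)), HS.
  - simpl. rewrite (IHf1 ltac:(auto) w z), (IHf2 ltac:(auto) w z). symmetry. apply (q_type (col z w)), HS.
  - apply truth_imp; auto.
  - apply truth_coimp; auto.
  - simpl. rewrite (IHf ltac:(auto) w (Z.succ z)). replace (Z.succ z) with (z + 1)%Z by lia.
    symmetry. apply (col_sensible z w), HS.
  - simpl. rewrite (IHf ltac:(auto) w (Z.pred z)). destruct (col_sensible (Z.pred z) w) as (_ & Hprev & _).
    replace (Z.pred z + 1)%Z with z in Hprev by lia. symmetry. apply Hprev, HS.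
  - apply truth_glob; auto.
  - apply truth_hist; auto.
  - apply truth_until; auto.
  - apply truth_since; auto.
Qed.

(** The valuation is downward closed since labels shrink upwards along a column. *)
Lemma val_model : birelational_model Qc Z Qcle Z.succ Z.pred val.
Proof.
  unfold birelational_model, linear_order. splits; [| | | |intros t; lia|intros t; lia|].
  - apply Qcle_refl.
  - intros x y z. apply Qcle_trans.
  - apply Qcle_antisym.
  - intros x y. destruct (Qclt_le_dec x y); [left; apply Qclt_le_weak|right]; assumption.
  - intros p w v t Hvw Hw. destruct (col_column t) as (_ & Hmono & _). exact (Hmono v w Hvw _ Hw).
Qed.
End Truth.

Lemma linked_sensible c c' w : linked W l R c c' -> sensible_pair Sg (l (c w)) (l (c' w)).
Proof.
  intros Hlink. destruct (Hlink w) as (p & q & Rpq & Hp & Hq).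
  exact (sensible_pair_ext Sg _ _ _ _ (q_sensible p q Rpq) Hp Hq).
Qed.

Lemma linked_converse_sensible c c' w : linked W l (converse R) c c' -> sensible_pair Sg (l (c' w)) (l (c w)).
Proof.
  intros Hlink. destruct (Hlink w) as (p & q & Rqp & Hp & Hq).
  exact (sensible_pair_ext Sg _ _ _ _ (q_sensible q p Rqp) Hq Hp).
Qed.

Definition time_columns (cf cb : nat -> Qc -> W) (z : Z) : Qc -> W :=
  if Z.leb 0 z then cf (Z.to_nat z) else cb (Z.to_nat (- z)).

Section Gluing.
Variables cf cb : nat -> Qc -> W.
Hypothesis same_start : cf O = cb O.
Hypothesis cf_column : forall t, column (cf t).
Hypothesis cb_column : forall t, column (cb t).
Hypothesis cf_linked : forall t, linked W l R (cf t) (cf (S t)).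
Hypothesis cb_linked : forall t, linked W l (converse R) (cb t) (cb (S t)).
Hypothesis cf_fair : forall w f t, Sg f ->
  exists s, (t <= s)%nat /\ (future_pending f (cf s w) -> exists n, future_done f (cf (s + n)%nat w)).
Hypothesis cb_fair : forall w f t, Sg f ->
  exists s, (t <= s)%nat /\ (past_pending f (cb s w) -> exists n, past_done f (cb (s + n)%nat w)).

Lemma time_columns_ahead s : time_columns cf cb (Z.of_nat s) = cf s.
Proof. unfold time_columns. destruct (Z.leb_spec 0 (Z.of_nat s)); [|lia]. rewrite Nat2Z.id. reflexivity. Qed.

Lemma time_columns_behind s : time_columns cf cb (- Z.of_nat s) = cb s.
Proof.
  unfold time_columns. destruct (Z.leb_spec 0 (- Z.of_nat s)).
  - replace s with O by lia. exact same_start.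
  - rewrite Z.opp_involutive, Nat2Z.id. reflexivity.
Qed.

Lemma time_columns_column z : column (time_columns cf cb z).
Proof. unfold time_columns. destruct (Z.leb 0 z); auto. Qed.

Lemma time_columns_sensible z w :
  sensible_pair Sg (l (time_columns cf cb z w)) (l (time_columns cf cb (z + 1) w)).
Proof.
  destruct (Z.le_gt_cases 0 z).
  - replace z with (Z.of_nat (Z.to_nat z)) by lia.
    replace (Z.of_nat (Z.to_nat z) + 1)%Z with (Z.of_nat (S (Z.to_nat z))) by lia.
    rewrite !time_columns_ahead. apply linked_sensible, cf_linked.
  - replace z with (- Z.of_nat (S (Z.to_nat (- (z + 1)))))%Z by lia.
    replace (- Z.of_nat (S (Z.to_nat (- (z + 1)))) + 1)%Z with (- Z.of_nat (Z.to_nat (- (z + 1))))%Z by lia.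
    rewrite !time_columns_behind. apply linked_converse_sensible, cb_linked.
Qed.

Lemma time_columns_future w f z : Sg f -> exists s, (z <= s)%Z /\
  (future_pending f (time_columns cf cb s w) -> exists n, future_done f (time_columns cf cb (ahead s n) w)).
Proof.
  intros HS. destruct (cf_fair w f (Z.to_nat z) HS) as (s & Hzs & Hs).
  exists (Z.of_nat s). split; [lia|]. rewrite time_columns_ahead. intros Hp.
  destruct (Hs Hp) as (n & Hn). exists n.
  replace (ahead (Z.of_nat s) n) with (Z.of_nat (s + n)) by (unfold ahead; lia).
  rewrite time_columns_ahead. exact Hn.
Qed.

Lemma time_columns_past w f z : Sg f -> exists s, (s <= z)%Z /\
  (past_pending f (time_columns cf cb s w) -> exists n, past_done f (time_columns cf cb (behind s n) w)).
Proof.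
  intros HS. destruct (cb_fair w f (Z.to_nat (- z)) HS) as (s & Hzs & Hs).
  exists (- Z.of_nat s)%Z. split; [lia|]. rewrite time_columns_behind. intros Hp.
  destruct (Hs Hp) as (n & Hn). exists n.
  replace (behind (- Z.of_nat s) n) with (- Z.of_nat (s + n))%Z by (unfold behind; lia).
  rewrite time_columns_behind. exact Hn.
Qed.
End Gluing.

(** The main construction: from a world [w0] falsifying [phi], a column through [w0]
    is moved forward and backward in time, fulfilling all eventualities; the glued
    family gives a bi-relational model on [Qc x Z] falsifying [phi] at [(0, 0)]. *)
Theorem falsifying_model phi w0 : Sg phi -> ~ l w0 phi ->
  exists (W' : Type) (le' : W' -> W' -> Prop) (V : nat -> W' -> Z -> Prop),
    birelational_model W' Z le' Z.succ Z.pred V /\ falsifies W' Z le' Z.succ Z.pred V phi.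
Proof.
  intros Hphi Hw0.
  destruct (column_through W le l sgl q_le_refl q_le_trans q_comparable_trans q_label_mono q_label_finite w0)
    as (c0 & Hc0 & Hc0w0).
  destruct (column_sequence R future_pending future_done c0 q_confluent q_convex q_bi_serial
              future_realizable Hc0) as (cf & Hcf0 & Hcf & Hcfl & Hcff).
  destruct (column_sequence (converse R) past_pending past_done c0 (fully_confluent_converse le R q_confluent)
              (convex_rel_converse le R q_convex) (bi_serial_converse R q_bi_serial)
              past_realizable Hc0) as (cb & Hcb0 & Hcb & Hcbl & Hcbf).
  assert (Hstart : cf O = cb O) by congruence.
  set (col := time_columns cf cb).
  exists Qc, Qcle, (val col). split.
  - apply val_model, time_columns_column; assumption.
  - exists (Q2Qc 0), 0%Z. intros Hsat. apply Hw0.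
    apply (truth col (time_columns_column cf cb Hcf Hcb) (time_columns_sensible cf cb Hstart Hcfl Hcbl)
             (time_columns_future cf cb Hcff) (time_columns_past cf cb Hstart Hcbf) phi Hphi) in Hsat.
    replace (col 0%Z) with c0 in Hsat by (rewrite <- Hcf0; apply (time_columns_ahead cf cb 0)).
    rewrite Hc0w0 in Hsat. exact Hsat.
Qed.

End FromQuasimodel.

Theorem proposition5p3 (Sg : fset) (W : Type) (le : W -> W -> Prop)
  (l : W -> fset) (R : W -> W -> Prop) (phi : formula) :
  finite_fset Sg -> subformula_closed Sg ->
  quasimodel Sg W le l R ->
  Sg phi -> (exists w, ~ l w phi) ->
  exists (W' : Type) (le' : W' -> W' -> Prop) (V : nat -> W' -> Z -> Prop),
    birelational_model W' Z le' Z.succ Z.pred V /\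
    falsifies W' Z le' Z.succ Z.pred V phi.
Proof.
  intros [sgl Hsgl] Hclosed HQ Hphi [w0 Hw0].
  exact (falsifying_model Sg W le l R sgl Hsgl Hclosed HQ phi w0 Hphi Hw0).
Qed.
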